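(* In the standing setup, the functions $\tau:L\mapsto\tau_L$ and $\gamma:L\mapsto\gamma_L$ on $\mathcal{V}$ satisfy, at every $L\in\mathcal{V}$, $|D|\tau(L)\le2\gamma_L\tau_L$ and $|D|\gamma(L)\le\gamma_L^2(1+3\tau_L)$.
   Context: Standing setup: $\mathcal{X}$ is a real or complex Banach space; $L_0\in\mathcal{B}(\mathcal{X})$ has a simple isolated eigenvalue $\lambda_0$ (there are $u\ne0$ with $L_0u=\lambda_0u$ and a closed $L_0$-invariant complement $G$ of $\langle u\rangle$ with $(L_0-\lambda_0)|_G$ boundedly invertible). $\mathcal{V}$ is an open neighborhood of $L_0$ on which there are analytic maps $\lambda,u,\phi$ with $\lambda_{L_0}=\lambda_0$, $\lambda_L$ a simple isolated eigenvalue of $L$ with eigenvector $u_L$ and eigenform $\phi_L$ ($\phi_L\circ L=\lambda_L\phi_L$), $\phi_L(u_L)=1$. $P_L=\phi_L(\cdot)u_L$, $\pi_L=\mathrm{Id}-P_L$, $S_L=(L-\lambda_L)|_{\ker\phi_L}^{-1}\pi_L$, $\tau_L=\|P_L\|=\|\phi_L\|\|u_L\|$, $\gamma_L=\|S_L\|$. The metric derivative of a real function $f$ on an open subset of a Banach space is $|D|f(x)=\limsup_{r\to0}\sup_{y\in B(x,r)}|f(x)-f(y)|/\|x-y\|$. *)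

From Stdlib Require Import Reals ClassicalEpsilon.
Open Scope R_scope.

Inductive Kind := KR | KC.

Record Cx := mkC { Cre : R; Cim : R }.
Definition Cadd (z w : Cx) := mkC (Cre z + Cre w) (Cim z + Cim w).
Definition Cmul (z w : Cx) :=
  mkC (Cre z * Cre w - Cim z * Cim w) (Cre z * Cim w + Cim z * Cre w).
Definition Copp (z : Cx) := mkC (- Cre z) (- Cim z).
Definition Cabs (z : Cx) := sqrt (Cre z * Cre z + Cim z * Cim z).

Definition sc (k : Kind) : Type := match k with KR => R | KC => Cx end.
Definition kzero {k} : sc k := match k return sc k with KR => 0 | KC => mkC 0 0 end.
Definition kone {k} : sc k := match k return sc k with KR => 1 | KC => mkC 1 0 end.
Definition kadd {k} : sc k -> sc k -> sc k :=
  match k return sc k -> sc k -> sc k with KR => Rplus | KC => Cadd end.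
Definition kmul {k} : sc k -> sc k -> sc k :=
  match k return sc k -> sc k -> sc k with KR => Rmult | KC => Cmul end.
Definition kopp {k} : sc k -> sc k :=
  match k return sc k -> sc k with KR => Ropp | KC => Copp end.
Definition kabs {k} : sc k -> R :=
  match k return sc k -> R with KR => Rabs | KC => Cabs end.

Record Banach (k : Kind) := {
  bcar :> Type;
  bzero : bcar;
  badd : bcar -> bcar -> bcar;
  bopp : bcar -> bcar;
  bscal : sc k -> bcar -> bcar;
  bnorm : bcar -> R;
  ax_addA : forall x y z, badd x (badd y z) = badd (badd x y) z;
  ax_addC : forall x y, badd x y = badd y x;
  ax_add0 : forall x, badd x bzero = x;
  ax_addN : forall x, badd x (bopp x) = bzero;
  ax_scalDr : forall a x y, bscal a (badd x y) = badd (bscal a x) (bscal a y);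
  ax_scalDl : forall a b x, bscal (kadd a b) x = badd (bscal a x) (bscal b x);
  ax_scalA : forall a b x, bscal a (bscal b x) = bscal (kmul a b) x;
  ax_scal1 : forall x, bscal kone x = x;
  ax_norm_eq0 : forall x, bnorm x = 0 -> x = bzero;
  ax_norm_scal : forall a x, bnorm (bscal a x) = kabs a * bnorm x;
  ax_norm_tri : forall x y, bnorm (badd x y) <= bnorm x + bnorm y;
  ax_complete : forall s : nat -> bcar,
    (forall eps, 0 < eps -> exists N, forall m n, (m >= N)%nat -> (n >= N)%nat ->
        bnorm (badd (s m) (bopp (s n))) < eps) ->
    exists l, forall eps, 0 < eps -> exists N, forall n, (n >= N)%nat ->
        bnorm (badd (s n) (bopp l)) < eps
}.
Arguments bzero {k} _.
Arguments badd {k} {_} _ _.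
Arguments bopp {k} {_} _.
Arguments bscal {k} {_} _ _.
Arguments bnorm {k} {_} _.

Section Ops.
Context {k : Kind} {X : Banach k}.

Definition bsub (x y : X) : X := badd x (bopp y).

Definition BLop (T : X -> X) : Prop :=
  (forall x y, T (badd x y) = badd (T x) (T y)) /\
  (forall a x, T (bscal a x) = bscal a (T x)) /\
  (exists M, forall x, bnorm (T x) <= M * bnorm x).

Definition BLfun (f : X -> sc k) : Prop :=
  (forall x y, f (badd x y) = kadd (f x) (f y)) /\
  (forall a x, f (bscal a x) = kmul a (f x)) /\
  (exists M, forall x, kabs (f x) <= M * bnorm x).

Definition opnorm (T : X -> X) : R :=
  epsilon (inhabits 0)
    (is_lub (fun r => exists x : X, bnorm x <= 1 /\ r = bnorm (T x))).
Definition funnorm (f : X -> sc k) : R :=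
  epsilon (inhabits 0)
    (is_lub (fun r => exists x : X, bnorm x <= 1 /\ r = kabs (f x))).

Definition op_add (T U : X -> X) : X -> X := fun x => badd (T x) (U x).
Definition op_sub (T U : X -> X) : X -> X := fun x => bsub (T x) (U x).
Definition op_scal (a : sc k) (T : X -> X) : X -> X := fun x => bscal a (T x).

Definition is_open_op (V : (X -> X) -> Prop) : Prop :=
  forall L, V L -> BLop L /\
    exists r, 0 < r /\ forall L', BLop L' -> opnorm (op_sub L' L) < r -> V L'.

Definition closed_subspace (G : X -> Prop) : Prop :=
  G (bzero X) /\ (forall x y, G x -> G y -> G (badd x y)) /\
  (forall a x, G x -> G (bscal a x)) /\
  (forall (s : nat -> X) l, (forall n, G (s n)) ->
     (forall eps, 0 < eps -> exists N, forall n, (n >= N)%nat -> bnorm (bsub (s n) l) < eps) ->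
     G l).

Definition simple_isolated_eigenvalue (L : X -> X) (lam : sc k) : Prop :=
  exists u : X, u <> bzero X /\ L u = bscal lam u /\
  exists G : X -> Prop,
    closed_subspace G /\
    (forall g, G g -> G (L g)) /\
    (* G is a complement of <u> *)
    (forall x, exists a g, G g /\ x = badd (bscal a u) g) /\
    (forall a, G (bscal a u) -> a = kzero) /\
    (* (L - lam)|_G is boundedly invertible on G *)
    exists Rinv : X -> X,
      (forall h, G h -> G (Rinv h) /\ bsub (L (Rinv h)) (bscal lam (Rinv h)) = h) /\
      (forall g, G g -> Rinv (bsub (L g) (bscal lam g)) = g) /\
      (exists M, forall h, G h -> bnorm (Rinv h) <= M * bnorm h).

(** Codomains for analytic maps: K, X, X^* *)
Record RawSpace := {
  rcar : Type;
  radd : rcar -> rcar -> rcar;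
  rsub : rcar -> rcar -> rcar;
  rscal : sc k -> rcar -> rcar;
  rnorm : rcar -> R;
  rmem : rcar -> Prop     (* membership in the (sub)space *)
}.

Definition raw_K : RawSpace :=
  {| rcar := sc k; radd := kadd; rsub := fun a b => kadd a (kopp b);
     rscal := kmul; rnorm := kabs; rmem := fun _ => True |}.
Definition raw_X : RawSpace :=
  {| rcar := bcar k X; radd := badd; rsub := bsub; rscal := bscal;
     rnorm := bnorm; rmem := fun _ => True |}.
Definition raw_dual : RawSpace :=
  {| rcar := X -> sc k;
     radd := fun f g x => kadd (f x) (g x);
     rsub := fun f g x => kadd (f x) (kopp (g x));
     rscal := fun a f x => kmul a (f x);
     rnorm := funnorm; rmem := BLfun |}.

Fixpoint prodR (f : nat -> R) (n : nat) : R :=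
  match n with O => 1 | S m => prodR f m * f m end.

Definition upd (v : nat -> (X -> X)) (i : nat) (H : X -> X) : nat -> (X -> X) :=
  fun j => if Nat.eqb j i then H else v j.

Definition bounded_multilinear (Y : RawSpace) (n : nat)
    (A : (nat -> (X -> X)) -> rcar Y) (M : R) : Prop :=
  0 <= M /\
  (forall v w, (forall i, (i < n)%nat -> v i = w i) -> A v = A w) /\
  (forall v, (forall i, (i < n)%nat -> BLop (v i)) ->
     rmem Y (A v) /\ rnorm Y (A v) <= M * prodR (fun i => opnorm (v i)) n) /\
  (forall v i a H1 H2, (i < n)%nat -> (forall j, (j < n)%nat -> BLop (v j)) ->
     BLop H1 -> BLop H2 ->
     A (upd v i (op_add H1 (op_scal a H2))) =
       radd Y (A (upd v i H1)) (rscal Y a (A (upd v i H2)))).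

Fixpoint rsum (Y : RawSpace) (g : nat -> rcar Y) (N : nat) : rcar Y :=
  match N with O => g O | S m => radd Y (rsum Y g m) (g (S m)) end.

Definition analytic_at (Y : RawSpace) (V : (X -> X) -> Prop)
    (f : (X -> X) -> rcar Y) (L0 : X -> X) : Prop :=
  exists r, 0 < r /\
  exists (A : nat -> (nat -> (X -> X)) -> rcar Y) (M : nat -> R),
    (forall n, bounded_multilinear Y n (A n) (M n)) /\
    (exists l, Un_cv (fun N => sum_f_R0 (fun n => M n * r ^ n) N) l) /\
    (forall H, BLop H -> opnorm H < r ->
       V (op_add L0 H) /\
       Un_cv (fun N => rnorm Y (rsub Y (f (op_add L0 H))
                                  (rsum Y (fun n => A n (fun _ => H)) N))) 0).

Definition analytic_on (Y : RawSpace) (V : (X -> X) -> Prop)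
    (f : (X -> X) -> rcar Y) : Prop :=
  forall L, V L -> analytic_at Y V f L.

Definition tau_of (u : (X -> X) -> X) (phi : (X -> X) -> X -> sc k) (L : X -> X) : R :=
  funnorm (phi L) * bnorm (u L).

Definition P_of (u : (X -> X) -> X) (phi : (X -> X) -> X -> sc k) (L : X -> X) : X -> X :=
  fun x => bscal (phi L x) (u L).
Definition pi_of (u : (X -> X) -> X) (phi : (X -> X) -> X -> sc k) (L : X -> X) : X -> X :=
  fun x => bsub x (P_of u phi L x).

Definition S_of (lam : (X -> X) -> sc k) (u : (X -> X) -> X)
    (phi : (X -> X) -> X -> sc k) (L : X -> X) : X -> X :=
  fun x => epsilon (inhabits (bzero X))
    (fun y => phi L y = kzero /\ bsub (L y) (bscal (lam L) y) = pi_of u phi L x).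

Definition gamma_of lam u phi (L : X -> X) : R := opnorm (S_of lam u phi L).

(** |D| f (L) <= c, for f defined on the open set V of B(X):
    limsup_{r->0} sup_{L' in B(L,r), L' <> L} |f L - f L'| / ||L - L'|| <= c *)
Definition metric_deriv_le (V : (X -> X) -> Prop) (f : (X -> X) -> R)
    (L : X -> X) (c : R) : Prop :=
  forall eps, 0 < eps -> exists r, 0 < r /\
    forall L', V L' -> L' <> L -> opnorm (op_sub L' L) < r ->
      Rabs (f L - f L') / opnorm (op_sub L L') <= c + eps.

End Ops.

From Stdlib Require Import Reals ClassicalEpsilon Lra Psatz FunctionalExtensionality.
Open Scope R_scope.

(* For nearby [L], [L'] put [H = L' - L] and [dlam = lam L' - lam L].  Applying
   [phi_L] to [(L - lam_L) u_L' = dlam u_L' - H u_L'] gives [|dlam| <= (tau + o(1)) ||H||].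
   [tau_L] is the norm of the rank-one projection [P_L], and
     [P_L' x - P_L x = phi_L'(x) pi_L(u_L') - phi_L(pi_L'(x)) u_L],
   while the reduced resolvents satisfy
     [S_L' x - S_L x = phi_L(x) S_L'(u_L) - phi_L'(S_L x) u_L' - S_L'(H S_L x) + dlam S_L'(S_L x)],
   in which [S_L'(u_L)] and [phi_L'(S_L x)] are themselves [O(||H||)].  Every other
   factor converges as [L' -> L]: [u] and [phi] are locally Lipschitz, being analytic,
   and [gamma] is continuous by a first, cruder use of the same identity.  The
   leading terms give [2 gamma tau], resp. [gamma^2] from [S_L' H S_L] plus
   [gamma^2 tau] from each of the three other terms. *)

Lemma sc_ring (k : Kind) :
  ring_theory (@kzero k) kone kadd kmul (fun a b => kadd a (kopp b)) kopp eq.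
Proof.
  destruct k; constructor; simpl; intros; try ring;
    repeat match goal with z : Cx |- _ => destruct z end;
    unfold Cadd, Cmul, Copp; simpl; f_equal; ring.
Qed.

Definition kofR {k} (r : R) : sc k := match k return sc k with KR => r | KC => mkC r 0 end.

Lemma kabs_ge0 {k} (a : sc k) : 0 <= kabs a.
Proof. destruct k; simpl; [apply Rabs_pos | apply sqrt_pos]. Qed.

Lemma kabs_mul {k} (a b : sc k) : kabs (kmul a b) = kabs a * kabs b.
Proof.
  destruct k; simpl; [apply Rabs_mult|].
  destruct a as [a1 a2], b as [b1 b2]; unfold Cabs, Cmul; simpl.
  rewrite <- sqrt_mult by nra. f_equal; ring.
Qed.

Lemma kabs_triangle {k} (a b : sc k) : kabs (kadd a b) <= kabs a + kabs b.
Proof.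
  destruct k; simpl; [apply Rabs_triang|].
  destruct a as [a1 a2], b as [b1 b2]; unfold Cabs, Cadd; simpl.
  set (p := sqrt (a1*a1+a2*a2)); set (q := sqrt (b1*b1+b2*b2)).
  assert (hp : 0 <= p) by apply sqrt_pos. assert (hq : 0 <= q) by apply sqrt_pos.
  assert (Hp : p*p = a1*a1+a2*a2) by (apply sqrt_sqrt; nra).
  assert (Hq : q*q = b1*b1+b2*b2) by (apply sqrt_sqrt; nra).
  assert (cauchy_schwarz : a1*b1+a2*b2 <= p*q).
  { destruct (Rle_dec (a1*b1+a2*b2) 0); [nra|].
    apply Rsqr_incr_0_var; [|nra]. unfold Rsqr.
    replace (p*q*(p*q)) with ((p*p)*(q*q)) by ring. rewrite Hp, Hq.
    pose proof (Rle_0_sqr (a1*b2 - a2*b1)); unfold Rsqr in *; nra. }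
  rewrite <- (sqrt_square (p+q)) by lra. apply sqrt_le_1_alt. nra.
Qed.

Lemma kabs_opp {k} (a : sc k) : kabs (kopp a) = kabs a.
Proof. destruct k; simpl; [apply Rabs_Ropp|]. destruct a; unfold Cabs, Copp; simpl; f_equal; ring. Qed.

Lemma kabs_zero {k} : kabs (@kzero k) = 0.
Proof.
  destruct k; simpl; [apply Rabs_R0|]. unfold Cabs; simpl.
  replace (0*0+0*0) with 0 by ring. apply sqrt_0.
Qed.

Lemma kabs_one {k} : kabs (@kone k) = 1.
Proof.
  destruct k; simpl; [apply Rabs_R1|]. unfold Cabs; simpl.
  replace (1*1+0*0) with 1 by ring. apply sqrt_1.
Qed.

Lemma kabs_eq0 {k} (a : sc k) : kabs a = 0 -> a = kzero.
Proof.
  destruct k; simpl; intro H.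
  - destruct (Req_dec a 0) as [->|Ha]; auto. exfalso; exact (Rabs_no_R0 a Ha H).
  - destruct a as [a1 a2]; unfold Cabs in H; simpl in H.
    apply sqrt_eq_0 in H; [|nra]. f_equal; nra.
Qed.

Lemma kabs_kofR {k} r : kabs (@kofR k r) = Rabs r.
Proof.
  destruct k; simpl; auto. unfold Cabs; simpl.
  replace (r*r+0*0) with (Rsqr r) by (unfold Rsqr; ring). apply sqrt_Rsqr_abs.
Qed.

Lemma kone_neq0 {k} : (@kone k) <> kzero.
Proof. intro H. pose proof (f_equal kabs H) as E. rewrite kabs_one, kabs_zero in E. lra. Qed.

Section ScalarField.
Context {k : Kind}.
Add Ring sc_ring_k : (sc_ring k).

Lemma kabs_triangle_inv (a b : sc k) : kabs a - kabs b <= kabs (kadd a (kopp b)).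
Proof.
  pose proof (kabs_triangle (kadd a (kopp b)) b) as T.
  replace (kadd (kadd a (kopp b)) b) with a in T by ring. lra.
Qed.

Lemma kabs_subC (a b : sc k) : kabs (kadd a (kopp b)) = kabs (kadd b (kopp a)).
Proof. replace (kadd a (kopp b)) with (kopp (kadd b (kopp a))) by ring. apply kabs_opp. Qed.

Lemma kmul_eq0 (a b : sc k) : kmul a b = kzero -> a = kzero \/ b = kzero.
Proof.
  intro H. assert (E : kabs a * kabs b = 0) by (rewrite <- kabs_mul, H; apply kabs_zero).
  destruct (Rmult_integral _ _ E); [left|right]; apply kabs_eq0; auto.
Qed.

Lemma ksub_eq0 (a b : sc k) : kadd a (kopp b) = kzero -> a = b.
Proof. intro H. transitivity (kadd (kadd a (kopp b)) b); [ring|]. rewrite H; ring. Qed.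

End ScalarField.

Arguments ax_addA {k b0} x y z. Arguments ax_addC {k b0} x y. Arguments ax_add0 {k b0} x.
Arguments ax_addN {k b0} x. Arguments ax_scalDr {k b0} a x y. Arguments ax_scalDl {k b0} a b x.
Arguments ax_scalA {k b0} a b x. Arguments ax_scal1 {k b0} x. Arguments ax_norm_eq0 {k b0} x.
Arguments ax_norm_scal {k b0} a x. Arguments ax_norm_tri {k b0} x y.

Section VectorAlgebra.
Context {k : Kind} {X : Banach k}.
Add Ring sc_ring_k : (sc_ring k).
Implicit Types x y z w : X.
Notation "0v" := (bzero X).

Lemma add0l x : badd 0v x = x.
Proof. rewrite ax_addC; apply ax_add0. Qed.
Lemma addNl x : badd (bopp x) x = 0v.
Proof. rewrite ax_addC; apply ax_addN. Qed.
Lemma addI (a x y : X) : badd a x = badd a y -> x = y.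
Proof. intro H. rewrite <- (add0l x), <- (add0l y), <- (addNl a), <- !ax_addA, H; auto. Qed.
Lemma opp_unique x y : badd x y = 0v -> y = bopp x.
Proof. intro H. apply (addI x). rewrite H, ax_addN; auto. Qed.
Lemma oppK x : bopp (bopp x) = x.
Proof. symmetry; apply opp_unique, addNl. Qed.
Lemma opp0 : bopp 0v = 0v.
Proof. symmetry; apply opp_unique, ax_add0. Qed.
Lemma oppD x y : bopp (badd x y) = badd (bopp x) (bopp y).
Proof.
  symmetry; apply opp_unique.
  rewrite (ax_addC (bopp x)), ax_addA, <- (ax_addA x), ax_addN, ax_add0, ax_addN; auto.
Qed.
Lemma scal0l x : bscal kzero x = 0v.
Proof. apply (addI (bscal kzero x)). rewrite <- ax_scalDl, ax_add0. f_equal; ring. Qed.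
Lemma scal0r a : bscal a 0v = 0v.
Proof. apply (addI (bscal a 0v)). rewrite <- ax_scalDr, !ax_add0; auto. Qed.
Lemma scalNl a x : bscal (kopp a) x = bopp (bscal a x).
Proof.
  apply opp_unique. rewrite <- ax_scalDl.
  replace (kadd a (kopp a)) with (@kzero k) by ring. apply scal0l.
Qed.
Lemma scalNr a x : bscal a (bopp x) = bopp (bscal a x).
Proof. apply opp_unique. rewrite <- ax_scalDr, ax_addN. apply scal0r. Qed.
Lemma opp_scal x : bopp x = bscal (kopp kone) x.
Proof. rewrite scalNl, ax_scal1; auto. Qed.
Lemma norm0 : bnorm 0v = 0.
Proof. rewrite <- (scal0l 0v), ax_norm_scal, kabs_zero; ring. Qed.
Lemma normN x : bnorm (bopp x) = bnorm x.
Proof. rewrite opp_scal, ax_norm_scal, kabs_opp, kabs_one; ring. Qed.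
Lemma norm_ge0 x : 0 <= bnorm x.
Proof. pose proof (ax_norm_tri x (bopp x)) as T. rewrite ax_addN, norm0, normN in T. lra. Qed.

Lemma subvv x : bsub x x = 0v.
Proof. apply ax_addN. Qed.
Lemma subv0 x : bsub x 0v = x.
Proof. unfold bsub; rewrite opp0; apply ax_add0. Qed.
Lemma oppB x y : bopp (bsub x y) = bsub y x.
Proof. unfold bsub; rewrite oppD, oppK, ax_addC; auto. Qed.
Lemma norm_subC x y : bnorm (bsub x y) = bnorm (bsub y x).
Proof. rewrite <- oppB, normN; auto. Qed.
Lemma subv_eq0 x y : bsub x y = 0v -> x = y.
Proof. intro H. apply opp_unique in H. rewrite <- (oppK x), <- H, oppK; auto. Qed.
Lemma addBB (p q r : X) : badd (bsub p q) (bsub q r) = bsub p r.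
Proof. unfold bsub. rewrite <- ax_addA, (ax_addA (bopp q)), addNl, add0l; auto. Qed.
Lemma addKB x y : bsub (badd x y) x = y.
Proof. unfold bsub. rewrite (ax_addC x), <- ax_addA, ax_addN, ax_add0; auto. Qed.
Lemma addBK (a b : X) : badd a (bsub b a) = b.
Proof. unfold bsub. rewrite ax_addC, <- ax_addA, addNl, ax_add0; auto. Qed.
Lemma norm_sub_triangle x y z : bnorm (bsub x z) <= bnorm (bsub x y) + bnorm (bsub y z).
Proof. rewrite <- (addBB x y z). apply ax_norm_tri. Qed.
Lemma norm_sub_le x y : bnorm (bsub x y) <= bnorm x + bnorm y.
Proof. unfold bsub. rewrite <- (normN y). apply ax_norm_tri. Qed.
Lemma norm_sub_ge x y : bnorm x - bnorm y <= bnorm (bsub x y).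
Proof. pose proof (norm_sub_triangle x y 0v) as T. rewrite !subv0 in T. lra. Qed.
Lemma norm_scal_sub_le (a b : sc k) v w :
  bnorm (bsub (bscal a v) (bscal b w)) <= kabs a * bnorm v + kabs b * bnorm w.
Proof. eapply Rle_trans; [apply norm_sub_le|]. rewrite !ax_norm_scal. lra. Qed.

Lemma scalBl a b x : bscal (kadd a (kopp b)) x = bsub (bscal a x) (bscal b x).
Proof. rewrite ax_scalDl, scalNl; auto. Qed.
Lemma scalBr a x y : bscal a (bsub x y) = bsub (bscal a x) (bscal a y).
Proof. unfold bsub; rewrite ax_scalDr, scalNr; auto. Qed.
Lemma subDD (a b c d : X) : bsub (badd a b) (badd c d) = badd (bsub a c) (bsub b d).
Proof. unfold bsub. rewrite oppD, <- !ax_addA. f_equal. rewrite !ax_addA. f_equal. apply ax_addC. Qed.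
Lemma add_swap23 (p q r s : X) : badd (badd p q) (badd r s) = badd (badd p s) (badd r q).
Proof. rewrite <- !ax_addA. f_equal. rewrite (ax_addC r s), (ax_addC r q), !ax_addA. f_equal. apply ax_addC. Qed.
Lemma subBBl (a b c : X) : bsub (bsub a b) (bsub a c) = bsub c b.
Proof. unfold bsub. rewrite oppD, oppK, (ax_addC (bopp a) c), add_swap23, ax_addN, add0l; auto. Qed.
Lemma subBBr (a b c : X) : bsub (bsub a c) (bsub b c) = bsub a b.
Proof. unfold bsub. rewrite oppD, oppK, (ax_addC (bopp b) c), add_swap23, ax_addN, ax_add0; auto. Qed.
Lemma subDl (a c y : X) : bsub (badd a c) y = badd (bsub a y) c.
Proof. unfold bsub. rewrite <- !ax_addA. f_equal. apply ax_addC. Qed.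
Lemma subBl (a b y : X) : bsub (bsub a b) y = bsub (bsub a y) b.
Proof. apply subDl. Qed.
Lemma sub0l x : bsub 0v x = bopp x.
Proof. apply add0l. Qed.

Lemma norm_sub_le4 (z c y w1 w2 w3 : X) :
  bsub z c = badd (bsub (bsub y w1) w2) w3 ->
  bnorm (bsub z y) <= bnorm c + bnorm w1 + bnorm w2 + bnorm w3.
Proof.
  intro Heq.
  replace (bsub z y) with (badd (badd (bsub (bopp w1) w2) w3) c).
  - pose proof (ax_norm_tri (badd (bsub (bopp w1) w2) w3) c).
    pose proof (ax_norm_tri (bsub (bopp w1) w2) w3).
    pose proof (norm_sub_le (bopp w1) w2). rewrite normN in *. lra.
  - rewrite <- (addBK c z), Heq, (ax_addC c), subDl, subDl,
      (subBl (bsub y w1)), (subBl y w1 y), subvv, sub0l.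
    reflexivity.
Qed.

End VectorAlgebra.

Section NormsOfBoundedMaps.
Context {k : Kind} {X : Banach k}.
Add Ring sc_ring_k : (sc_ring k).
Notation "0v" := (bzero X).

(* [opnorm T] and [funnorm f] are [unit_ball_sup] of [bnorm \o T] and [kabs \o f], by conversion. *)
Definition unit_ball_sup (g : X -> R) : R :=
  epsilon (inhabits 0) (is_lub (fun r => exists x : X, bnorm x <= 1 /\ r = g x)).

Lemma unit_ball_sup_spec (g : X -> R) C :
  (forall x, 0 <= g x) -> (forall a x, g (bscal a x) = kabs a * g x) ->
  (forall x, g x <= C * bnorm x) ->
  (forall x, g x <= unit_ball_sup g * bnorm x) /\ 0 <= unit_ball_sup g /\
  (forall C', 0 <= C' -> (forall x, g x <= C' * bnorm x) -> unit_ball_sup g <= C').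
Proof.
  intros Hg0 Hhom HC.
  set (E := fun r => exists x : X, bnorm x <= 1 /\ r = g x).
  assert (g0 : g 0v = 0) by (rewrite <- (scal0l 0v), Hhom, kabs_zero; ring).
  assert (HE : is_lub E (unit_ball_sup g)).
  { unfold unit_ball_sup. apply epsilon_spec. destruct (completeness E) as [m Hm].
    - exists (Rabs C). intros r [x [Hx ->]]. pose proof (HC x). pose proof (norm_ge0 x).
      pose proof (Rle_abs C). pose proof (Rabs_pos C). nra.
    - exists 0, 0v. rewrite norm0, g0. split; [lra|auto].
    - exists m; auto. }
  destruct HE as [Hub Hleast]. split; [|split].
  - intro x. destruct (Req_dec (bnorm x) 0) as [H0|H0].
    + apply ax_norm_eq0 in H0; subst. rewrite g0, norm0. lra.
    + pose proof (norm_ge0 x) as Hx.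
      assert (Hinv : 0 < / bnorm x) by (apply Rinv_0_lt_compat; lra).
      assert (Hy : g (bscal (@kofR k (/ bnorm x)) x) <= unit_ball_sup g).
      { apply Hub. eexists; split; [|reflexivity].
        rewrite ax_norm_scal, kabs_kofR, Rabs_right by lra. right; field; auto. }
      rewrite Hhom, kabs_kofR, Rabs_right in Hy by lra.
      apply (Rmult_le_compat_l (bnorm x)) in Hy; auto.
      rewrite <- Rmult_assoc, Rinv_r, Rmult_1_l in Hy by auto. lra.
  - apply Rle_trans with (g 0v); [rewrite g0; lra|].
    apply Hub. exists 0v. rewrite norm0; split; auto; lra.
  - intros C' HC' Hb. apply Hleast. intros r [x [Hx ->]].
    pose proof (Hb x). pose proof (norm_ge0 x). nra.
Qed.

Lemma opnorm_spec (T : X -> X) : BLop T ->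
  (forall x, bnorm (T x) <= opnorm T * bnorm x) /\ 0 <= opnorm T /\
  (forall C', 0 <= C' -> (forall x, bnorm (T x) <= C' * bnorm x) -> opnorm T <= C').
Proof.
  intros [_ [Hhom [C HC]]]. apply (unit_ball_sup_spec _ C); auto.
  - intro; apply norm_ge0.
  - intros a x; rewrite Hhom; apply ax_norm_scal.
Qed.

Lemma funnorm_spec (f : X -> sc k) : BLfun f ->
  (forall x, kabs (f x) <= funnorm f * bnorm x) /\ 0 <= funnorm f /\
  (forall C', 0 <= C' -> (forall x, kabs (f x) <= C' * bnorm x) -> funnorm f <= C').
Proof.
  intros [_ [Hhom [C HC]]]. apply (unit_ball_sup_spec _ C); auto.
  - intro; apply kabs_ge0.
  - intros a x; rewrite Hhom; apply kabs_mul.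
Qed.

Lemma opnorm_le (T : X -> X) x : BLop T -> bnorm (T x) <= opnorm T * bnorm x.
Proof. intro H; apply (opnorm_spec T H). Qed.
Lemma opnorm_ge0 (T : X -> X) : BLop T -> 0 <= opnorm T.
Proof. intro H; apply (opnorm_spec T H). Qed.
Lemma opnorm_lub (T : X -> X) C : BLop T -> 0 <= C -> (forall x, bnorm (T x) <= C * bnorm x) -> opnorm T <= C.
Proof. intro H; apply (opnorm_spec T H). Qed.
Lemma funnorm_le (f : X -> sc k) x : BLfun f -> kabs (f x) <= funnorm f * bnorm x.
Proof. intro H; apply (funnorm_spec f H). Qed.
Lemma funnorm_ge0 (f : X -> sc k) : BLfun f -> 0 <= funnorm f.
Proof. intro H; apply (funnorm_spec f H). Qed.
Lemma funnorm_lub (f : X -> sc k) C : BLfun f -> 0 <= C -> (forall x, kabs (f x) <= C * bnorm x) -> funnorm f <= C.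
Proof. intro H; apply (funnorm_spec f H). Qed.

Lemma BLop_sub (T U : X -> X) : BLop T -> BLop U -> BLop (op_sub T U).
Proof.
  intros [Ta [Ts [CT HT]]] [Ua [Us [CU HU]]]. unfold op_sub. split; [|split].
  - intros. rewrite Ta, Ua, subDD; auto.
  - intros. rewrite Ts, Us, scalBr; auto.
  - exists (CT + CU). intro x. eapply Rle_trans; [apply norm_sub_le|].
    specialize (HT x); specialize (HU x). lra.
Qed.

Lemma opnorm_subC (T U : X -> X) : BLop T -> BLop U -> opnorm (op_sub T U) = opnorm (op_sub U T).
Proof.
  intros HT HU.
  pose proof (BLop_sub _ _ HT HU) as B1. pose proof (BLop_sub _ _ HU HT) as B2.
  apply Rle_antisym; apply opnorm_lub; auto; try apply opnorm_ge0; auto;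
    intro x; unfold op_sub; rewrite norm_subC;
    first [apply (opnorm_le (op_sub T U)) | apply (opnorm_le (op_sub U T))]; auto.
Qed.

Lemma opnorm_le_add (T U : X -> X) B : BLop T -> BLop U -> 0 <= B ->
  (forall x, bnorm (bsub (T x) (U x)) <= B * bnorm x) -> opnorm T <= opnorm U + B.
Proof.
  intros HT HU hB Hb. apply opnorm_lub; auto; [pose proof (opnorm_ge0 U HU); lra|].
  intro x. pose proof (norm_sub_ge (T x) (U x)). pose proof (Hb x). pose proof (opnorm_le U x HU). lra.
Qed.

(* [funnorm f * bnorm v] is the norm of the rank-one operator [x |-> f x v]. *)
Lemma rank_one_norm_le_add (f g : X -> sc k) (v w : X) B :
  BLfun f -> BLfun g -> 0 < bnorm v -> 0 <= B ->
  (forall x, bnorm (bsub (bscal (f x) v) (bscal (g x) w)) <= B * bnorm x) ->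
  funnorm f * bnorm v <= funnorm g * bnorm w + B.
Proof.
  intros Hf Hg hv hB Hb. set (C := funnorm g * bnorm w + B).
  assert (hC : 0 <= C) by (pose proof (funnorm_ge0 g Hg); pose proof (norm_ge0 w); unfold C; nra).
  assert (Hfv : funnorm f <= C / bnorm v).
  { apply funnorm_lub; auto; [unfold Rdiv; apply Rmult_le_pos; [lra|left; apply Rinv_0_lt_compat; lra]|].
    intro x. pose proof (norm_sub_ge (bscal (f x) v) (bscal (g x) w)) as Q.
    rewrite !ax_norm_scal in Q.
    pose proof (Hb x). pose proof (funnorm_le g x Hg). pose proof (norm_ge0 w). pose proof (norm_ge0 x).
    assert (kabs (f x) * bnorm v <= C * bnorm x) by (unfold C; nra).
    apply (Rmult_le_reg_r (bnorm v)); auto.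
    replace (C / bnorm v * bnorm x * bnorm v) with (C * bnorm x) by (field; lra). lra. }
  apply (Rmult_le_compat_r (bnorm v)) in Hfv; [|lra].
  replace (C / bnorm v * bnorm v) with C in Hfv by (field; lra). exact Hfv.
Qed.

Definition fsub (f g : X -> sc k) : X -> sc k := fun x => kadd (f x) (kopp (g x)).

Lemma BLfun_add (f g : X -> sc k) : BLfun f -> BLfun g -> BLfun (fun x => kadd (f x) (g x)).
Proof.
  intros [fa [fs [Cf HCf]]] [ga [gs [Cg HCg]]]. split; [|split].
  - intros; rewrite fa, ga; ring.
  - intros; rewrite fs, gs; ring.
  - exists (Cf + Cg). intro x. eapply Rle_trans; [apply kabs_triangle|].
    specialize (HCf x); specialize (HCg x). lra.
Qed.

Lemma BLfun_sub (f g : X -> sc k) : BLfun f -> BLfun g -> BLfun (fsub f g).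
Proof.
  intros [fa [fs [Cf HCf]]] [ga [gs [Cg HCg]]]. unfold fsub. split; [|split].
  - intros; rewrite fa, ga; ring.
  - intros; rewrite fs, gs; ring.
  - exists (Cf + Cg). intro x. eapply Rle_trans; [apply kabs_triangle|]. rewrite kabs_opp.
    specialize (HCf x); specialize (HCg x). lra.
Qed.

Lemma funnorm_le_add (a b : X -> sc k) : BLfun a -> BLfun b ->
  funnorm a <= funnorm b + funnorm (fsub a b).
Proof.
  intros Ha Hb. pose proof (BLfun_sub _ _ Ha Hb) as Hab.
  apply funnorm_lub; auto; [pose proof (funnorm_ge0 _ Hb); pose proof (funnorm_ge0 _ Hab); lra|].
  intro x. pose proof (kabs_triangle_inv (a x) (b x)). pose proof (funnorm_le _ x Hb).
  pose proof (funnorm_le _ x Hab). unfold fsub in *. lra.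
Qed.

Lemma funnorm_sub_triangle (a b c : X -> sc k) : BLfun a -> BLfun b -> BLfun c ->
  funnorm (fsub a b) <= funnorm (fsub a c) + funnorm (fsub c b).
Proof.
  intros Ha Hb Hc.
  pose proof (BLfun_sub _ _ Ha Hc) as B1. pose proof (BLfun_sub _ _ Hc Hb) as B2.
  apply funnorm_lub; [apply BLfun_sub; auto|pose proof (funnorm_ge0 _ B1); pose proof (funnorm_ge0 _ B2); lra|].
  intro x. replace (fsub a b x) with (kadd (fsub a c x) (fsub c b x)) by (unfold fsub; ring).
  eapply Rle_trans; [apply kabs_triangle|].
  pose proof (funnorm_le _ x B1). pose proof (funnorm_le _ x B2). lra.
Qed.

Lemma funnorm_subC (a b : X -> sc k) : BLfun a -> BLfun b -> funnorm (fsub a b) = funnorm (fsub b a).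
Proof.
  intros Ha Hb. pose proof (BLfun_sub _ _ Ha Hb) as B1. pose proof (BLfun_sub _ _ Hb Ha) as B2.
  apply Rle_antisym; apply funnorm_lub; auto; try apply funnorm_ge0; auto;
    intro x; unfold fsub at 1; rewrite kabs_subC;
    first [apply (funnorm_le (fsub a b)) | apply (funnorm_le (fsub b a))]; auto.
Qed.

Lemma funnorm_addKB (s t : X -> sc k) : BLfun s -> BLfun t ->
  funnorm (fsub (fun x => kadd (s x) (t x)) s) <= funnorm t.
Proof.
  intros Hs Ht. apply funnorm_lub; [apply BLfun_sub, Hs; apply BLfun_add; auto|apply funnorm_ge0; auto|].
  intro x. unfold fsub. replace (kadd (kadd (s x) (t x)) (kopp (s x))) with (t x) by ring.
  apply funnorm_le; auto.
Qed.

Lemma funnorm_subvv (a : X -> sc k) : BLfun a -> funnorm (fsub a a) = 0.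
Proof.
  intro Ha. apply Rle_antisym; [|apply funnorm_ge0, BLfun_sub; auto].
  apply funnorm_lub; [apply BLfun_sub; auto|lra|].
  intro x. unfold fsub. replace (kadd (a x) (kopp (a x))) with (@kzero k) by ring.
  rewrite kabs_zero. pose proof (norm_ge0 x). lra.
Qed.

End NormsOfBoundedMaps.

Section LinearMaps.
Context {k : Kind} {X : Banach k}.
Add Ring sc_ring_k : (sc_ring k).
Notation "0v" := (bzero X).

Section Operator.
Variables (T : X -> X) (HT : BLop T).
Lemma BLopD x y : T (badd x y) = badd (T x) (T y).
Proof. apply HT. Qed.
Lemma BLopZ a x : T (bscal a x) = bscal a (T x).
Proof. apply HT. Qed.
Lemma BLop0 : T 0v = 0v.
Proof. rewrite <- (scal0l 0v) at 1. rewrite BLopZ, scal0l; auto. Qed.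
Lemma BLopB x y : T (bsub x y) = bsub (T x) (T y).
Proof. unfold bsub; rewrite BLopD, !opp_scal, BLopZ; auto. Qed.
End Operator.

Section Functional.
Variables (f : X -> sc k) (Hf : BLfun f).
Lemma BLfunD x y : f (badd x y) = kadd (f x) (f y).
Proof. apply Hf. Qed.
Lemma BLfunZ a x : f (bscal a x) = kmul a (f x).
Proof. apply Hf. Qed.
Lemma BLfun0 : f 0v = kzero.
Proof. rewrite <- (scal0l 0v) at 1. rewrite BLfunZ; ring. Qed.
Lemma BLfunB x y : f (bsub x y) = kadd (f x) (kopp (f y)).
Proof. unfold bsub; rewrite BLfunD, opp_scal, BLfunZ; ring. Qed.
End Functional.

End LinearMaps.

(** * The reduced resolvent *)

Section EigenData.
Context {k : Kind} {X : Banach k}.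
Variables (lam : (X -> X) -> sc k) (u : (X -> X) -> X) (phi : (X -> X) -> X -> sc k).

Record eigen_data (L : X -> X) : Prop := {
  ed_bounded : BLop L;
  ed_simple : simple_isolated_eigenvalue L (lam L);
  ed_eigvec : L (u L) = bscal (lam L) (u L);
  ed_form : BLfun (phi L);
  ed_eigform : forall x, phi L (L x) = kmul (lam L) (phi L x);
  ed_normalized : phi L (u L) = kone }.

Definition shifted (L : X -> X) (x : X) : X := bsub (L x) (bscal (lam L) x).

End EigenData.

Arguments ed_bounded {k X lam u phi L}. Arguments ed_simple {k X lam u phi L}.
Arguments ed_eigvec {k X lam u phi L}. Arguments ed_form {k X lam u phi L}.
Arguments ed_eigform {k X lam u phi L}. Arguments ed_normalized {k X lam u phi L}.

Section ReducedResolvent.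
Context {k : Kind} {X : Banach k}.
Add Ring sc_ring_k' : (sc_ring k).
Notation "0v" := (bzero X).
Context {lam : (X -> X) -> sc k} {u : (X -> X) -> X} {phi : (X -> X) -> X -> sc k}.
Context {L : X -> X} (E : eigen_data lam u phi L).
Notation N := (shifted lam L).
Notation P := (pi_of u phi L).
Notation S := (S_of lam u phi L).

Lemma shifted_BLop : BLop N.
Proof.
  destruct (ed_bounded E) as [La [Ls [C HC]]]. unfold shifted. split; [|split].
  - intros. rewrite La, ax_scalDr, subDD; auto.
  - intros. rewrite Ls, scalBr, !ax_scalA. do 2 f_equal. ring.
  - exists (C + kabs (lam L)). intro x. eapply Rle_trans; [apply norm_sub_le|].
    rewrite ax_norm_scal. specialize (HC x). lra.
Qed.

Lemma pi_BLop : BLop P.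
Proof.
  pose proof (ed_form E) as Hf. unfold pi_of, P_of. split; [|split].
  - intros. rewrite (BLfunD _ Hf), ax_scalDl, subDD; auto.
  - intros. rewrite (BLfunZ _ Hf), scalBr, ax_scalA; auto.
  - exists (1 + funnorm (phi L) * bnorm (u L)). intro x.
    eapply Rle_trans; [apply norm_sub_le|]. rewrite ax_norm_scal.
    pose proof (funnorm_le _ x Hf). pose proof (norm_ge0 (u L)). nra.
Qed.

Lemma eigvec_norm_pos : 0 < bnorm (u L).
Proof.
  destruct (Rle_lt_or_eq_dec _ _ (norm_ge0 (u L))) as [|Z]; auto. exfalso.
  apply (@kone_neq0 k). rewrite <- (ed_normalized E), (ax_norm_eq0 (u L)) by auto.
  apply (BLfun0 _ (ed_form E)).
Qed.

Lemma phi_shifted x : phi L (N x) = kzero.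
Proof. unfold shifted. rewrite (BLfunB _ (ed_form E)), (ed_eigform E), (BLfunZ _ (ed_form E)); auto. ring. Qed.

Lemma shifted_u : N (u L) = 0v.
Proof. unfold shifted. rewrite (ed_eigvec E). apply subvv. Qed.

Lemma phi_pi x : phi L (P x) = kzero.
Proof.
  unfold pi_of, P_of. rewrite (BLfunB _ (ed_form E)), (BLfunZ _ (ed_form E)), (ed_normalized E). ring.
Qed.

Lemma pi_ker x : phi L x = kzero -> P x = x.
Proof. intro H. unfold pi_of, P_of. rewrite H, scal0l, subv0; auto. Qed.

Lemma pi_u : P (u L) = 0v.
Proof. unfold pi_of, P_of. rewrite (ed_normalized E), ax_scal1. apply subvv. Qed.

(* The complement [G] of the definition is forced to be [ker phi_L]: [G] is
   contained in the range of [L - lam_L], which [phi_L] annihilates, and a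
   vector of [ker phi_L] has no component along [u_L] because [phi_L u_L = 1]. *)
Lemma shifted_invertible_on_ker : exists (Rinv : X -> X) (M : R),
  (forall y, phi L y = kzero ->
     phi L (Rinv y) = kzero /\ N (Rinv y) = y /\ bnorm (Rinv y) <= M * bnorm y) /\
  (forall y, phi L y = kzero -> N y = 0v -> y = 0v).
Proof.
  pose proof (ed_form E) as Hf. pose proof shifted_BLop as HN.
  destruct (ed_simple E)
    as [u0 [_ [Hu0 [G [[G0 _] [_ [Gdec [_ [Rinv [HR1 [HR2 [M HM]]]]]]]]]]]].
  assert (Gker : forall g, G g -> phi L g = kzero).
  { intros g Hg. destruct (HR1 g Hg) as [_ He]. rewrite <- He. apply (phi_shifted (Rinv g)). }
  assert (Nu0 : N u0 = 0v) by (unfold shifted; rewrite Hu0; apply subvv).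
  assert (GN0 : forall g, G g -> N g = 0v -> g = 0v).
  { intros g Hg Hn. rewrite <- (HR2 g Hg). change (bsub (L g) (bscal (lam L) g)) with (N g).
    rewrite Hn. pose proof (HR2 0v G0) as R0. unfold bsub in R0.
    rewrite (BLop0 _ (ed_bounded E)), scal0r, ax_addN in R0. auto. }
  assert (phu0 : phi L u0 <> kzero).
  { destruct (Gdec (u L)) as [a [g [Hg Hdec]]].
    assert (g = 0v).
    { apply GN0; auto. pose proof shifted_u as Hu. rewrite Hdec, (BLopD _ HN), (BLopZ _ HN), Nu0,
        scal0r, add0l in Hu. auto. }
    subst g. rewrite ax_add0 in Hdec. intro Hc. apply (@kone_neq0 k).
    rewrite <- (ed_normalized E), Hdec, (BLfunZ _ Hf), Hc. ring. }
  assert (kerG : forall y, phi L y = kzero -> G y).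
  { intros y Hy. destruct (Gdec y) as [a [g [Hg Hdec]]].
    assert (a = kzero).
    { rewrite Hdec, (BLfunD _ Hf), (BLfunZ _ Hf), (Gker g Hg) in Hy.
      destruct (kmul_eq0 a (phi L u0)); auto; [rewrite <- Hy; ring|contradiction]. }
    subst a. rewrite Hdec, scal0l, add0l; auto. }
  exists Rinv, M. split.
  - intros y Hy. destruct (HR1 y (kerG y Hy)) as [HG He]. auto using Gker, kerG.
  - intros y Hy Hn. apply GN0; auto.
Qed.

Lemma S_spec x : phi L (S x) = kzero /\ N (S x) = P x.
Proof.
  unfold S_of. apply epsilon_spec. destruct shifted_invertible_on_ker as [Ri [M [H1 _]]].
  exists (Ri (P x)). destruct (H1 _ (phi_pi x)) as [A [B _]]. auto.
Qed.

Lemma phi_S x : phi L (S x) = kzero.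
Proof. apply S_spec. Qed.
Lemma shifted_S x : N (S x) = P x.
Proof. apply S_spec. Qed.

Lemma S_unique x y : phi L y = kzero -> N y = P x -> S x = y.
Proof.
  intros Hy HNy. destruct shifted_invertible_on_ker as [_ [_ [_ Hinj]]].
  apply subv_eq0, Hinj.
  - rewrite (BLfunB _ (ed_form E)), phi_S, Hy. ring.
  - rewrite (BLopB _ shifted_BLop), shifted_S, HNy. apply subvv.
Qed.

Lemma S_BLop : BLop S.
Proof.
  pose proof (ed_form E) as Hf. pose proof shifted_BLop as HN. pose proof pi_BLop as HP.
  split; [|split].
  - intros x y. apply S_unique.
    + rewrite (BLfunD _ Hf), !phi_S. ring.
    + rewrite (BLopD _ HN), !shifted_S, (BLopD _ HP). auto.
  - intros a x. apply S_unique.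
    + rewrite (BLfunZ _ Hf), phi_S. ring.
    + rewrite (BLopZ _ HN), !shifted_S, (BLopZ _ HP). auto.
  - destruct shifted_invertible_on_ker as [Ri [M [H1 _]]].
    exists (Rabs M * opnorm P). intro x.
    destruct (H1 _ (phi_pi x)) as [A [B C]]. rewrite (S_unique x _ A B).
    pose proof (opnorm_le _ x HP). pose proof (opnorm_ge0 _ HP).
    pose proof (Rle_abs M). pose proof (norm_ge0 (P x)). pose proof (Rabs_pos M). nra.
Qed.

Lemma S_shifted x : S (N x) = P x.
Proof.
  apply S_unique; [apply phi_pi|].
  rewrite (pi_ker (N x)) by apply phi_shifted. unfold pi_of, P_of.
  rewrite (BLopB _ shifted_BLop), (BLopZ _ shifted_BLop), shifted_u, scal0r, subv0. auto.
Qed.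

Lemma S_u : S (u L) = 0v.
Proof. apply S_unique; [apply (BLfun0 _ (ed_form E))|]. rewrite (BLop0 _ shifted_BLop), pi_u; auto. Qed.

End ReducedResolvent.

(** * Analytic maps are locally Lipschitz *)

Lemma le0_of_cv0 (x : R) (w : nat -> R) : (forall N, x <= w N) -> Un_cv w 0 -> x <= 0.
Proof.
  intros H Hc. destruct (Rle_dec x 0) as [|Hx]; auto. exfalso.
  destruct (Hc (x/2)) as [N HN]; [lra|]. specialize (HN N (le_n _)). specialize (H N).
  unfold Rdist in HN. rewrite Rminus_0_r in HN. pose proof (Rle_abs (w N)). lra.
Qed.

Lemma prodR_const (h : R) n : prodR (fun _ => h) n = h ^ n.
Proof. induction n as [|n IH]; simpl; auto. rewrite IH; ring. Qed.

Section OperatorSums.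
Context {k : Kind} {X : Banach k}.

Definition zero_op : X -> X := fun _ => bzero X.

Lemma zero_op_BLop : BLop zero_op.
Proof.
  unfold zero_op; split; [|split].
  - intros; rewrite ax_add0; auto.
  - intros; rewrite scal0r; auto.
  - exists 0; intro; rewrite norm0; lra.
Qed.

Lemma opnorm_zero_op : opnorm zero_op = 0.
Proof.
  apply Rle_antisym; [|apply opnorm_ge0, zero_op_BLop].
  apply opnorm_lub; [apply zero_op_BLop|lra|]. intro; unfold zero_op; rewrite norm0; lra.
Qed.

Lemma op_add_zero_op (L : X -> X) : op_add L zero_op = L.
Proof. apply functional_extensionality; intro x; unfold op_add, zero_op; apply ax_add0. Qed.

Lemma op_add_sub (L L' : X -> X) : op_add L (op_sub L' L) = L'.
Proof. apply functional_extensionality; intro x. apply addBK. Qed.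

End OperatorSums.

Section AnalyticLipschitz.
Context {k : Kind} {X : Banach k}.
Variable Y : @RawSpace k.
Notation d a b := (rnorm Y (rsub Y a b)).
Hypothesis d_triangle :
  forall a b c, rmem Y a -> rmem Y b -> rmem Y c -> d a b <= d a c + d c b.
Hypothesis d_sym : forall a b, rmem Y a -> rmem Y b -> d a b = d b a.
Hypothesis d_addK : forall s t, rmem Y s -> rmem Y t -> d (radd Y s t) s <= rnorm Y t.
Hypothesis d_refl : forall a, rmem Y a -> d a a = 0.
Hypothesis mem_add : forall s t, rmem Y s -> rmem Y t -> rmem Y (radd Y s t).

Section PowerSeries.
Variables (A : nat -> (nat -> (X -> X)) -> rcar Y) (M : nat -> R) (r : R).
Hypothesis HA : forall n, bounded_multilinear Y n (A n) (M n).
Hypothesis hr : 0 < r.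
Notation term n H := (A n (fun _ => H)).
Notation partial_sum H N := (rsum Y (fun n => term n H) N).

Lemma term_bound H n : BLop H -> rmem Y (term n H) /\ rnorm Y (term n H) <= M n * opnorm H ^ n.
Proof.
  intro BH. destruct (HA n) as [_ [_ [Hb _]]]. destruct (Hb (fun _ => H)) as [B1 B2]; auto.
  rewrite prodR_const in B2. auto.
Qed.

Lemma partial_sum_mem H N : BLop H -> rmem Y (partial_sum H N).
Proof.
  intro BH. induction N as [|N IH]; simpl; [apply term_bound, BH|].
  apply mem_add; [exact IH|apply term_bound, BH].
Qed.

Lemma term0_const H : term 0 H = term 0 zero_op.
Proof. destruct (HA 0%nat) as [_ [Hc _]]. apply Hc. intros i hi; inversion hi. Qed.

(* Comparing with the majorant series term by term: every term of positive
   degree has at least one factor [opnorm H <= r]. *)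
Lemma partial_sum_near_term0 H N : BLop H -> opnorm H < r ->
  d (partial_sum H N) (term 0 H) <= opnorm H / r * sum_f_R0 (fun n => M n * r ^ n) N.
Proof.
  intros BH hH. pose proof (opnorm_ge0 H BH) as h0.
  assert (hq : 0 <= opnorm H / r) by (unfold Rdiv; apply Rmult_le_pos; [lra|left; apply Rinv_0_lt_compat; lra]).
  induction N as [|N IH]; simpl.
  - rewrite d_refl by apply term_bound, BH. destruct (HA 0%nat) as [HM0 _]. nra.
  - destruct (term_bound H (S N) BH) as [Hm HS].
    destruct (term_bound H 0 BH) as [Hm0 _].
    pose proof (partial_sum_mem H N BH) as Hp.
    eapply Rle_trans; [apply (d_triangle _ _ (partial_sum H N)); auto|].
    pose proof (d_addK _ _ Hp Hm). rewrite Rmult_plus_distr_l.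
    assert (M (S N) * opnorm H ^ S N <= opnorm H / r * (M (S N) * r ^ S N)).
    { destruct (HA (S N)) as [HM _]. simpl.
      assert (opnorm H ^ N <= r ^ N) by (apply pow_incr; lra).
      replace (opnorm H / r * (M (S N) * (r * r ^ N))) with (M (S N) * (opnorm H * r ^ N)) by (field; lra).
      apply Rmult_le_compat_l; [auto|apply Rmult_le_compat_l; auto]. }
    change (r * r ^ N) with (r ^ S N). lra.
Qed.

End PowerSeries.

(* The constant term of the expansion at [L0] is [f L0], and the partial sums
   stay within [opnorm H * l / r] of it, [l] being the sum of the majorant. *)
Lemma analytic_locally_lipschitz (V : (X -> X) -> Prop) (f : (X -> X) -> rcar Y) L0 :
  analytic_at Y V f L0 -> (forall L, V L -> rmem Y (f L)) ->
  exists r C, 0 < r /\ 0 <= C /\ forall H, BLop H -> opnorm H < r ->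
    d (f (op_add L0 H)) (f L0) <= C * opnorm H.
Proof.
  intros [r [hr [A [M [HM [[l Hl] Hcv]]]]]] Hmem.
  assert (Hsum : forall N, sum_f_R0 (fun n => M n * r ^ n) N <= l).
  { apply growing_ineq; auto. intro n. simpl.
    destruct (HM (S n)) as [HMn _]. pose proof (pow_le r n (Rlt_le _ _ hr)).
    assert (0 <= M (S n) * (r * r ^ n)) by (apply Rmult_le_pos; [auto|apply Rmult_le_pos; lra]). lra. }
  assert (l0 : 0 <= l).
  { eapply Rle_trans; [|apply (Hsum O)]. simpl. destruct (HM 0%nat) as [HM0 _]. nra. }
  assert (Hz : opnorm (@zero_op k X) < r) by (rewrite opnorm_zero_op; auto).
  destruct (Hcv _ zero_op_BLop Hz) as [VL0 Hcv0]. rewrite op_add_zero_op in VL0, Hcv0.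
  pose proof (Hmem _ VL0) as Hf0.
  destruct (term_bound A M HM zero_op 0 zero_op_BLop) as [Hm0 _].
  assert (f_term0 : d (f L0) (A 0%nat (fun _ => zero_op)) <= 0).
  { refine (le0_of_cv0 _ _ _ Hcv0).
    intro N. pose proof (partial_sum_near_term0 A M r HM hr zero_op N zero_op_BLop Hz) as B.
    rewrite opnorm_zero_op in B. unfold Rdiv in B. rewrite !Rmult_0_l in B.
    pose proof (d_triangle _ _ _ Hf0 Hm0 (partial_sum_mem A M HM zero_op N zero_op_BLop)). lra. }
  exists r, (l / r). split; [auto|split; [unfold Rdiv; apply Rmult_le_pos; [auto|left; apply Rinv_0_lt_compat; auto]|]].
  intros H BH hH. destruct (Hcv H BH hH) as [VH HcvH].
  pose proof (Hmem _ VH) as HfH.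
  apply Rminus_le; refine (le0_of_cv0 _ _ _ HcvH). intro N.
  pose proof (partial_sum_mem A M HM H N BH) as Hp.
  pose proof (partial_sum_near_term0 A M r HM hr H N BH hH) as B. rewrite (term0_const A M HM) in B.
  pose proof (d_triangle _ _ _ HfH Hf0 Hp).
  pose proof (d_triangle _ _ _ Hp Hf0 Hm0). rewrite d_sym in f_term0 by auto.
  assert (opnorm H / r * sum_f_R0 (fun n => M n * r ^ n) N <= l / r * opnorm H).
  { replace (l / r * opnorm H) with (opnorm H / r * l) by (field; lra).
    apply Rmult_le_compat_l; auto.
    unfold Rdiv; apply Rmult_le_pos; [apply opnorm_ge0, BH|left; apply Rinv_0_lt_compat; auto]. }
  lra.
Qed.

End AnalyticLipschitz.

Section AnalyticInstances.
Context {k : Kind} {X : Banach k}.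

Lemma analytic_lipschitz_X (V : (X -> X) -> Prop) (f : (X -> X) -> X) L0 :
  analytic_at raw_X V f L0 ->
  exists r C, 0 < r /\ 0 <= C /\ forall H, BLop H -> opnorm H < r ->
    bnorm (bsub (f (op_add L0 H)) (f L0)) <= C * opnorm H.
Proof.
  intro Ha. refine (analytic_locally_lipschitz raw_X _ _ _ _ _ V f L0 Ha _); simpl; auto.
  - intros; apply norm_sub_triangle.
  - intros; apply norm_subC.
  - intros; rewrite addKB; lra.
  - intros; rewrite subvv; apply norm0.
Qed.

Lemma analytic_lipschitz_dual (V : (X -> X) -> Prop) (f : (X -> X) -> X -> sc k) L0 :
  analytic_at raw_dual V f L0 -> (forall L, V L -> BLfun (f L)) ->
  exists r C, 0 < r /\ 0 <= C /\ forall H, BLop H -> opnorm H < r ->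
    funnorm (fsub (f (op_add L0 H)) (f L0)) <= C * opnorm H.
Proof.
  intros Ha Hm. refine (analytic_locally_lipschitz raw_dual _ _ _ _ _ V f L0 Ha _); simpl; auto.
  - intros; apply funnorm_sub_triangle; auto.
  - intros; apply funnorm_subC; auto.
  - intros; apply funnorm_addKB; auto.
  - intros; apply funnorm_subvv; auto.
  - intros; apply BLfun_add; auto.
Qed.

End AnalyticInstances.

(** * Two-point estimates *)

Section TwoOperators.
Context {k : Kind} {X : Banach k}.
Add Ring sc_ring_k : (sc_ring k).
Variables (lam : (X -> X) -> sc k) (u : (X -> X) -> X) (phi : (X -> X) -> X -> sc k).
Variables (L L' : X -> X).
Hypotheses (E : eigen_data lam u phi L) (E' : eigen_data lam u phi L').

Notation dL := (op_sub L' L).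
Notation h := (opnorm (op_sub L' L)).
Notation dlam := (kadd (lam L') (kopp (lam L))).
Notation u0 := (u L).
Notation u1 := (u L').
Notation ph := (phi L).
Notation ph' := (phi L').
Notation P := (pi_of u phi L).
Notation P' := (pi_of u phi L').
Notation S := (S_of lam u phi L).
Notation S' := (S_of lam u phi L').
Notation g := (opnorm (S_of lam u phi L)).
Notation g' := (opnorm (S_of lam u phi L')).
Notation dph := (funnorm (fsub (phi L) (phi L'))).

Let BH : BLop dL := BLop_sub _ _ (ed_bounded E') (ed_bounded E).
Let Hf := ed_form E.
Let Hf' := ed_form E'.
Let HS := S_BLop E.
Let HS' := S_BLop E'.
Let Hdf : BLfun (fsub ph ph') := BLfun_sub _ _ Hf Hf'.
Let h_ge0 : 0 <= h := opnorm_ge0 _ BH.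
Let g_ge0 : 0 <= g := opnorm_ge0 _ HS.
Let g'_ge0 : 0 <= g' := opnorm_ge0 _ HS'.
Let ph_ge0 : 0 <= funnorm ph := funnorm_ge0 _ Hf.
Let ph'_ge0 : 0 <= funnorm ph' := funnorm_ge0 _ Hf'.
Let dph_ge0 : 0 <= dph := funnorm_ge0 _ Hdf.
Let dlam_ge0 : 0 <= kabs dlam := kabs_ge0 _.

Lemma shifted_u' : shifted lam L u1 = bsub (bscal dlam u1) (dL u1).
Proof. unfold shifted, op_sub. rewrite (ed_eigvec E'), scalBl, subBBl. reflexivity. Qed.

Lemma eigenvalue_change : kmul dlam (ph u1) = ph (dL u1).
Proof.
  apply ksub_eq0. pose proof (phi_shifted E u1) as Q.
  rewrite shifted_u', (BLfunB _ Hf), (BLfunZ _ Hf) in Q. exact Q.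
Qed.

Lemma eigenvalue_change_le : kabs dlam * (1 - funnorm ph * bnorm (bsub u1 u0)) <= funnorm ph * h * bnorm u1.
Proof.
  assert (A : kabs dlam * kabs (ph u1) <= funnorm ph * h * bnorm u1).
  { rewrite <- kabs_mul, eigenvalue_change. eapply Rle_trans; [apply funnorm_le, Hf|].
    pose proof (opnorm_le _ u1 BH). nra. }
  assert (B : 1 - funnorm ph * bnorm (bsub u1 u0) <= kabs (ph u1)).
  { pose proof (kabs_triangle_inv (@kone k) (ph u1)) as Q. rewrite kabs_one in Q.
    replace (kadd kone (kopp (ph u1))) with (kopp (ph (bsub u1 u0))) in Q
      by (rewrite (BLfunB _ Hf), (ed_normalized E); ring).
    rewrite kabs_opp in Q. pose proof (funnorm_le _ (bsub u1 u0) Hf). lra. }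
  nra.
Qed.

Lemma rank_one_change x : bsub (bscal (ph' x) u1) (bscal (ph x) u0) =
  bsub (bscal (ph' x) (P u1)) (bscal (ph (P' x)) u0).
Proof.
  unfold pi_of at 1 2, P_of. rewrite (BLfunB _ Hf), (BLfunZ _ Hf), scalBr, ax_scalA, scalBl, subBBr.
  reflexivity.
Qed.

Lemma pi_u' : P u1 = bsub (bscal dlam (S (bsub u1 u0))) (S (dL u1)).
Proof.
  rewrite <- (S_shifted E), shifted_u', (BLopB _ HS), (BLopZ _ HS), (BLopB _ HS u1 u0), (S_u E), subv0.
  reflexivity.
Qed.

Lemma phi_pi' x : ph (P' x) = kadd (ph (dL (S' x))) (kopp (kmul dlam (ph (S' x)))).
Proof.
  rewrite <- (shifted_S E' x). unfold shifted, op_sub.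
  rewrite !(BLfunB _ Hf), (BLfunZ _ Hf), (ed_eigform E). ring.
Qed.

Lemma phi_S'_le x : kabs (ph (S' x)) <= dph * g' * bnorm x.
Proof.
  replace (ph (S' x)) with (fsub ph ph' (S' x)) by (unfold fsub; rewrite (phi_S E'); ring).
  eapply Rle_trans; [apply funnorm_le, Hdf|]. rewrite Rmult_assoc.
  apply Rmult_le_compat_l; [auto|apply opnorm_le, HS'].
Qed.

Definition tau_err := funnorm ph' * (kabs dlam * g * bnorm (bsub u1 u0) + g * h * bnorm u1) +
  bnorm u0 * (funnorm ph * h * g' + kabs dlam * dph * g').

Lemma rank_one_change_le x :
  bnorm (bsub (bscal (ph' x) u1) (bscal (ph x) u0)) <= tau_err * bnorm x.
Proof.
  rewrite rank_one_change. eapply Rle_trans; [apply norm_scal_sub_le|].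
  assert (A : bnorm (P u1) <= kabs dlam * g * bnorm (bsub u1 u0) + g * h * bnorm u1).
  { rewrite pi_u'. eapply Rle_trans; [apply norm_sub_le|]. rewrite ax_norm_scal.
    pose proof (opnorm_le _ (bsub u1 u0) HS). pose proof (opnorm_le _ (dL u1) HS).
    pose proof (opnorm_le _ u1 BH). nra. }
  assert (B : kabs (ph (P' x)) <= (funnorm ph * h * g' + kabs dlam * dph * g') * bnorm x).
  { rewrite phi_pi'. eapply Rle_trans; [apply kabs_triangle|]. rewrite kabs_opp, kabs_mul.
    pose proof (funnorm_le _ (dL (S' x)) Hf). pose proof (opnorm_le _ (S' x) BH).
    pose proof (opnorm_le _ x HS'). pose proof (phi_S'_le x). pose proof (norm_ge0 x).
    assert (funnorm ph * bnorm (dL (S' x)) <= funnorm ph * h * g' * bnorm x).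
    { replace (funnorm ph * h * g' * bnorm x) with (funnorm ph * (h * (g' * bnorm x))) by ring.
      apply Rmult_le_compat_l; [auto|]. eapply Rle_trans; [eauto|]. apply Rmult_le_compat_l; auto. }
    assert (kabs dlam * kabs (ph (S' x)) <= kabs dlam * dph * g' * bnorm x).
    { replace (kabs dlam * dph * g' * bnorm x) with (kabs dlam * (dph * g' * bnorm x)) by ring.
      apply Rmult_le_compat_l; auto. }
    lra. }
  unfold tau_err. pose proof (funnorm_le _ x Hf'). pose proof (norm_ge0 (P u1)). pose proof (norm_ge0 u0).
  pose proof (kabs_ge0 (ph' x)). pose proof (kabs_ge0 (ph (P' x))). nra.
Qed.

Lemma shifted_change y : shifted lam L y = badd (bsub (shifted lam L' y) (dL y)) (bscal dlam y).
Proof. unfold shifted, op_sub. rewrite subBBl, scalBl, addBB. reflexivity. Qed.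

(* Apply [S'] to [(L - lam_L) (S x) = P x] and expand [L - lam_L] around [L']. *)
Lemma S_change x : bsub (S' x) (bscal (ph x) (S' u0)) =
  badd (bsub (bsub (S x) (bscal (ph' (S x)) u1)) (S' (dL (S x)))) (bscal dlam (S' (S x))).
Proof.
  transitivity (S' (P x)).
  { unfold pi_of, P_of. rewrite (BLopB _ HS'), (BLopZ _ HS'). reflexivity. }
  rewrite <- (shifted_S E x), shifted_change, (BLopD _ HS'), (BLopB _ HS'), (BLopZ _ HS'), (S_shifted E').
  reflexivity.
Qed.

Lemma S_change_le x s0 p : bnorm (S' u0) <= s0 -> (forall x, kabs (ph' (S x)) <= p * bnorm x) ->
  bnorm (bsub (S' x) (S x)) <= (funnorm ph * s0 + p * bnorm u1 + g' * h * g + kabs dlam * g' * g) * bnorm x.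
Proof.
  intros Hs0 Hp. eapply Rle_trans; [apply (norm_sub_le4 _ _ _ _ _ _ (S_change x))|].
  rewrite !ax_norm_scal.
  pose proof (funnorm_le _ x Hf). pose proof (Hp x). pose proof (norm_ge0 x).
  pose proof (norm_ge0 (S' u0)). pose proof (norm_ge0 u1).
  pose proof (kabs_ge0 (ph x)). pose proof (kabs_ge0 (ph' (S x))).
  assert (A1 : kabs (ph x) * bnorm (S' u0) <= funnorm ph * s0 * bnorm x) by nra.
  assert (A2 : kabs (ph' (S x)) * bnorm u1 <= p * bnorm u1 * bnorm x) by nra.
  assert (A3 : bnorm (S' (dL (S x))) <= g' * h * g * bnorm x).
  { eapply Rle_trans; [apply opnorm_le, HS'|]. rewrite !Rmult_assoc. apply Rmult_le_compat_l; [auto|].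
    eapply Rle_trans; [apply opnorm_le, BH|]. apply Rmult_le_compat_l; [auto|apply opnorm_le, HS]. }
  assert (A4 : kabs dlam * bnorm (S' (S x)) <= kabs dlam * g' * g * bnorm x).
  { rewrite !Rmult_assoc. apply Rmult_le_compat_l; [auto|]. eapply Rle_trans; [apply opnorm_le, HS'|].
    apply Rmult_le_compat_l; [auto|apply opnorm_le, HS]. }
  lra.
Qed.

Lemma S'u_le_crude : bnorm (S' u0) <= g' * bnorm (bsub u1 u0).
Proof.
  replace (S' u0) with (bopp (S' (bsub u1 u0))); [rewrite normN; apply opnorm_le, HS'|].
  rewrite (BLopB _ HS'), (S_u E'), sub0l, oppK. reflexivity.
Qed.

Lemma S'u_le : bnorm (S' u0) <= g' * g' * h * bnorm u0 + kabs dlam * g' * (g' * bnorm (bsub u1 u0)).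
Proof.
  assert (Hid : S' u0 = bsub (S' (S' (dL u0))) (bscal dlam (S' (S' u0)))).
  { transitivity (S' (P' u0)).
    { unfold pi_of, P_of. rewrite (BLopB _ HS'), (BLopZ _ HS'), (S_u E'), scal0r, subv0. reflexivity. }
    assert (Hsh : shifted lam L' u0 = bsub (dL u0) (bscal dlam u0)).
    { unfold shifted, op_sub. rewrite (ed_eigvec E), scalBl, subBBr. reflexivity. }
    rewrite <- (S_shifted E'), Hsh, (BLopB _ HS'), (BLopZ _ HS'), (BLopB _ HS'), (BLopZ _ HS').
    reflexivity. }
  rewrite Hid at 1. eapply Rle_trans; [apply norm_sub_le|]. rewrite ax_norm_scal.
  assert (A1 : bnorm (S' (S' (dL u0))) <= g' * g' * h * bnorm u0).
  { eapply Rle_trans; [apply opnorm_le, HS'|]. rewrite !Rmult_assoc. apply Rmult_le_compat_l; [auto|].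
    eapply Rle_trans; [apply opnorm_le, HS'|]. apply Rmult_le_compat_l; [auto|apply opnorm_le, BH]. }
  assert (A2 : kabs dlam * bnorm (S' (S' u0)) <= kabs dlam * g' * (g' * bnorm (bsub u1 u0))).
  { rewrite Rmult_assoc. apply Rmult_le_compat_l; [auto|]. eapply Rle_trans; [apply opnorm_le, HS'|].
    apply Rmult_le_compat_l; [auto|apply S'u_le_crude]. }
  lra.
Qed.

Lemma phi'_S_le_crude x : kabs (ph' (S x)) <= funnorm ph' * g * bnorm x.
Proof.
  eapply Rle_trans; [apply funnorm_le, Hf'|]. rewrite Rmult_assoc.
  apply Rmult_le_compat_l; [auto|apply opnorm_le, HS].
Qed.

(* [S x = (L - lam_L) (S (S x))], and [phi_L'] kills [L' - lam_L'] but not [L - lam_L]. *)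
Lemma phi'_S_le x : kabs (ph' (S x)) <= (funnorm ph' * h * g * g + kabs dlam * dph * g * g) * bnorm x.
Proof.
  set (z := S (S x)).
  assert (Nz : shifted lam L z = S x).
  { unfold z. rewrite (shifted_S E), pi_ker; [reflexivity|apply (phi_S E)]. }
  assert (Hid : ph' (S x) = kadd (kopp (ph' (dL z))) (kmul dlam (ph' z))).
  { rewrite <- Nz. unfold shifted, op_sub. rewrite !(BLfunB _ Hf'), (BLfunZ _ Hf'), (ed_eigform E'). ring. }
  assert (Hz2 : bnorm z <= g * (g * bnorm x)).
  { eapply Rle_trans; [apply opnorm_le, HS|]. apply Rmult_le_compat_l; [auto|apply opnorm_le, HS]. }
  assert (Hz : kabs (ph' z) <= dph * (g * (g * bnorm x))).
  { replace (ph' z) with (kopp (fsub ph ph' z)) by (unfold fsub, z; rewrite (phi_S E); ring).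
    rewrite kabs_opp. eapply Rle_trans; [apply funnorm_le, Hdf|]. apply Rmult_le_compat_l; auto. }
  rewrite Hid. eapply Rle_trans; [apply kabs_triangle|]. rewrite kabs_opp, kabs_mul.
  assert (A1 : kabs (ph' (dL z)) <= funnorm ph' * h * g * g * bnorm x).
  { eapply Rle_trans; [apply funnorm_le, Hf'|]. rewrite !Rmult_assoc. apply Rmult_le_compat_l; [auto|].
    eapply Rle_trans; [apply opnorm_le, BH|]. apply Rmult_le_compat_l; auto. }
  assert (A2 : kabs dlam * kabs (ph' z) <= kabs dlam * dph * g * g * bnorm x).
  { replace (kabs dlam * dph * g * g * bnorm x) with (kabs dlam * (dph * (g * (g * bnorm x)))) by ring.
    apply Rmult_le_compat_l; auto. }
  lra.
Qed.

Definition gamma_err_crude := funnorm ph * (g' * bnorm (bsub u1 u0)) + funnorm ph' * g * bnorm u1 +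
  g' * h * g + kabs dlam * g' * g.
Definition gamma_err := funnorm ph * (g' * g' * h * bnorm u0 + kabs dlam * g' * (g' * bnorm (bsub u1 u0))) +
  (funnorm ph' * h * g * g + kabs dlam * dph * g * g) * bnorm u1 + g' * h * g + kabs dlam * g' * g.

Lemma S_change_le_crude x : bnorm (bsub (S' x) (S x)) <= gamma_err_crude * bnorm x.
Proof. apply S_change_le; [apply S'u_le_crude|apply phi'_S_le_crude]. Qed.

Lemma S_change_le_fine x : bnorm (bsub (S' x) (S x)) <= gamma_err * bnorm x.
Proof. apply S_change_le; [apply S'u_le|apply phi'_S_le]. Qed.

End TwoOperators.

Section NearAnOperator.
Context {k : Kind} {X : Banach k}.
Variables (V : (X -> X) -> Prop) (L : X -> X).
Hypothesis V_bounded : forall L', V L' -> BLop L'.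
Hypothesis L_bounded : BLop L.

Definition near (Q : (X -> X) -> Prop) : Prop :=
  exists r, 0 < r /\ forall L', V L' -> opnorm (op_sub L' L) < r -> Q L'.
Definition tends_to (f : (X -> X) -> R) (a : R) : Prop :=
  forall eps, 0 < eps -> near (fun L' => Rabs (f L' - a) < eps).

Lemma near_and (Q1 Q2 : (X -> X) -> Prop) : near Q1 -> near Q2 -> near (fun L' => Q1 L' /\ Q2 L').
Proof.
  intros [r1 [h1 H1]] [r2 [h2 H2]]. exists (Rmin r1 r2). split; [apply Rmin_pos; auto|].
  intros L' VL' hl. pose proof (Rmin_l r1 r2). pose proof (Rmin_r r1 r2).
  split; [apply H1|apply H2]; auto; lra.
Qed.

Lemma near_mono (Q1 Q2 : (X -> X) -> Prop) :
  near Q1 -> (forall L', V L' -> Q1 L' -> Q2 L') -> near Q2.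
Proof. intros [r [hr H1]] H12. exists r; split; auto. Qed.

Lemma near_V : near V.
Proof. exists 1; split; [lra|auto]. Qed.

Lemma tends_to_const a : tends_to (fun _ => a) a.
Proof. intros e he. exists 1; split; [lra|]. intros. rewrite Rminus_diag, Rabs_R0; auto. Qed.

Lemma tends_to_dist : tends_to (fun L' => opnorm (op_sub L' L)) 0.
Proof.
  intros e he. exists e; split; auto. intros L' VL' hl.
  pose proof (opnorm_ge0 _ (BLop_sub _ _ (V_bounded L' VL') L_bounded)).
  rewrite Rminus_0_r, Rabs_right; lra.
Qed.

Lemma tends_to_le f a b : near (fun L' => Rabs (f L' - a) <= b L') -> tends_to b 0 -> tends_to f a.
Proof.
  intros Hfb Hb e he. apply (near_mono _ _ (near_and _ _ Hfb (Hb e he))).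
  intros L' _ [A B]. rewrite Rminus_0_r in B. pose proof (Rle_abs (b L')). lra.
Qed.

Lemma tends_to_eq f a b : tends_to f a -> a = b -> tends_to f b.
Proof. intros; subst; auto. Qed.

Lemma tends_to_near_lt f a b : tends_to f a -> a < b -> near (fun L' => f L' < b).
Proof.
  intros Hf hab. apply (near_mono _ _ (Hf (b - a) ltac:(lra))). intros L' _ A.
  pose proof (Rle_abs (f L' - a)). lra.
Qed.

Lemma tends_to_plus f g a b : tends_to f a -> tends_to g b -> tends_to (fun L' => f L' + g L') (a + b).
Proof.
  intros Hf Hg e he. apply (near_mono _ _ (near_and _ _ (Hf (e/2) ltac:(lra)) (Hg (e/2) ltac:(lra)))).
  intros L' _ [A B]. replace (f L' + g L' - (a + b)) with ((f L' - a) + (g L' - b)) by ring.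
  pose proof (Rabs_triang (f L' - a) (g L' - b)). lra.
Qed.

Lemma tends_to_mult f g a b : tends_to f a -> tends_to g b -> tends_to (fun L' => f L' * g L') (a * b).
Proof.
  intros Hf Hg e he.
  assert (pa : 0 <= Rabs a) by apply Rabs_pos. assert (pb : 0 <= Rabs b) by apply Rabs_pos.
  set (e1 := e / (2 * (Rabs b + 1))). set (e2 := Rmin 1 (e / (2 * (Rabs a + 1)))).
  assert (he1 : 0 < e1) by (unfold e1; apply Rdiv_lt_0_compat; lra).
  assert (he2 : 0 < e2) by (unfold e2; apply Rmin_pos; [lra|apply Rdiv_lt_0_compat; lra]).
  apply (near_mono _ _ (near_and _ _ (Hf e1 he1) (Hg e2 he2))). intros L' _ [A B].
  pose proof (Rmin_l 1 (e / (2 * (Rabs a + 1)))). pose proof (Rmin_r 1 (e / (2 * (Rabs a + 1)))).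
  replace (f L' * g L' - a * b) with ((f L' - a) * g L' + a * (g L' - b)) by ring.
  eapply Rle_lt_trans; [apply Rabs_triang|]. rewrite !Rabs_mult.
  assert (Gb : Rabs (g L') <= Rabs b + 1) by (pose proof (Rabs_triang_inv (g L') b); unfold e2 in B; lra).
  assert (C1 : Rabs (f L' - a) * Rabs (g L') <= e1 * (Rabs b + 1))
    by (apply Rmult_le_compat; auto using Rabs_pos; lra).
  assert (C2 : Rabs a * Rabs (g L' - b) <= Rabs a * (e / (2 * (Rabs a + 1))))
    by (apply Rmult_le_compat_l; unfold e2 in B; lra).
  assert (E1 : e1 * (Rabs b + 1) = e / 2) by (unfold e1; field; lra).
  assert (E2 : Rabs a * (e / (2 * (Rabs a + 1))) < e / 2).
  { apply (Rmult_lt_reg_r (2 * (Rabs a + 1))); [lra|].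
    replace (Rabs a * (e / (2 * (Rabs a + 1))) * (2 * (Rabs a + 1))) with (Rabs a * e) by (field; lra). nra. }
  lra.
Qed.

Lemma metric_deriv_le_of_err (f err : (X -> X) -> R) c : 0 <= c -> tends_to err c ->
  near (fun L' => Rabs (f L - f L') <= opnorm (op_sub L' L) * err L') -> metric_deriv_le V f L c.
Proof.
  intros hc Herr Hb eps heps.
  destruct (near_and _ _ Hb (tends_to_near_lt _ _ (c + eps) Herr ltac:(lra))) as [r [hr Hr]].
  exists r; split; auto. intros L' VL' _ hl. destruct (Hr L' VL' hl) as [A B].
  rewrite opnorm_subC by auto.
  pose proof (opnorm_ge0 _ (BLop_sub _ _ (V_bounded L' VL') L_bounded)) as h0.
  destruct (Req_dec (opnorm (op_sub L' L)) 0) as [Z|NZ].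
  - rewrite Z, Rdiv_0_r. lra.
  - apply Rle_trans with (err L'); [|lra]. apply (Rmult_le_reg_r (opnorm (op_sub L' L))); [lra|].
    unfold Rdiv. rewrite Rmult_assoc, Rinv_l, Rmult_1_r by auto. lra.
Qed.

End NearAnOperator.

(** * The metric derivatives of [tau] and [gamma] *)

Arguments eigenvalue_change_le {k X lam u phi L L'}.
Arguments rank_one_change_le {k X lam u phi L L'}.
Arguments S_change_le_crude {k X lam u phi L L'}.
Arguments S_change_le_fine {k X lam u phi L L'}.

Section MetricDerivatives.
Context {k : Kind} {X : Banach k}.
Variables (lam : (X -> X) -> sc k) (u : (X -> X) -> X) (phi : (X -> X) -> X -> sc k).
Variables (V : (X -> X) -> Prop) (L : X -> X).
Hypothesis V_eigen : forall L', V L' -> eigen_data lam u phi L'.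
Hypothesis VL : V L.
Hypothesis u_analytic : analytic_at raw_X V u L.
Hypothesis phi_analytic : analytic_at raw_dual V phi L.

Let EL := V_eigen L VL.
Let V_bounded L' (VL' : V L') : BLop L' := ed_bounded (V_eigen L' VL').
Let L_bounded : BLop L := V_bounded L VL.
Let V_form L' (VL' : V L') : BLfun (phi L') := ed_form (V_eigen L' VL').
Local Notation near_L := (near V L).
Local Notation tends_L := (tends_to V L).

Let h L' := opnorm (op_sub L' L).
Let du L' := bnorm (bsub (u L') (u L)).
Let nu L' := bnorm (u L').
Let nphi L' := funnorm (phi L').
Let dphi L' := funnorm (fsub (phi L) (phi L')).
Let gam L' := opnorm (S_of lam u phi L').
Let adl L' := kabs (kadd (lam L') (kopp (lam L))).
Let phi0 := funnorm (phi L).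
Let u0 := bnorm (u L).
Let gam0 := opnorm (S_of lam u phi L).
Let tau0 := phi0 * u0.

Let phi0_ge0 : 0 <= phi0 := funnorm_ge0 _ (V_form L VL).
Let u0_ge0 : 0 <= u0 := norm_ge0 _.
Let gam0_ge0 : 0 <= gam0 := opnorm_ge0 _ (S_BLop EL).

Lemma quantities_ge0 L' : V L' ->
  0 <= h L' /\ 0 <= du L' /\ 0 <= nu L' /\ 0 <= nphi L' /\ 0 <= dphi L' /\ 0 <= gam L' /\ 0 <= adl L'.
Proof.
  intro VL'. unfold h, du, nu, nphi, dphi, gam, adl.
  repeat split; try apply norm_ge0.
  - apply opnorm_ge0, BLop_sub; auto.
  - apply funnorm_ge0; auto.
  - apply funnorm_ge0, BLfun_sub; auto.
  - apply opnorm_ge0, (S_BLop (V_eigen L' VL')).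
  - apply kabs_ge0.
Qed.

Local Ltac pos := repeat (first [assumption | apply Rplus_le_le_0_compat | apply Rmult_le_pos]).
Local Ltac tend := repeat (first [eassumption | apply tends_to_const | apply tends_to_plus | apply tends_to_mult]).

Lemma tends_h : tends_L h 0.
Proof. exact (tends_to_dist V L V_bounded L_bounded). Qed.

Lemma tends_mult_h C : tends_L (fun L' => C * h L') 0.
Proof. apply (tends_to_eq _ _ _ (C * 0)); [|ring]. pose proof tends_h. tend. Qed.

Lemma tends_du : tends_L du 0.
Proof.
  destruct (analytic_lipschitz_X V u L u_analytic) as [r [C [hr [hC Hb]]]].
  apply (tends_to_le _ _ _ _ (fun L' => C * h L')); [|apply tends_mult_h].
  exists r; split; auto. intros L' VL' hl.
  specialize (Hb (op_sub L' L) (BLop_sub _ _ (V_bounded L' VL') L_bounded) hl).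
  rewrite op_add_sub in Hb. unfold du. rewrite Rminus_0_r, Rabs_right; [auto|apply Rle_ge, norm_ge0].
Qed.

Lemma tends_dphi : tends_L dphi 0.
Proof.
  destruct (analytic_lipschitz_dual V phi L phi_analytic V_form) as [r [C [hr [hC Hb]]]].
  apply (tends_to_le _ _ _ _ (fun L' => C * h L')); [|apply tends_mult_h].
  exists r; split; auto. intros L' VL' hl.
  specialize (Hb (op_sub L' L) (BLop_sub _ _ (V_bounded L' VL') L_bounded) hl).
  rewrite op_add_sub in Hb. destruct (quantities_ge0 L' VL') as [_ [_ [_ [_ [Hd _]]]]].
  unfold dphi, h in *. rewrite Rminus_0_r, Rabs_right by lra. rewrite funnorm_subC by auto. exact Hb.
Qed.

Lemma tends_nu : tends_L nu u0.
Proof.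
  apply (tends_to_le _ _ _ _ du); [|apply tends_du]. apply (near_mono _ _ _ _ (near_V V L)).
  intros L' _ _. unfold nu, u0, du.
  pose proof (norm_sub_ge (u L') (u L)). pose proof (norm_sub_ge (u L) (u L')) as B.
  rewrite norm_subC in B. apply Rabs_le. lra.
Qed.

Lemma tends_nphi : tends_L nphi phi0.
Proof.
  apply (tends_to_le _ _ _ _ dphi); [|apply tends_dphi]. apply (near_mono _ _ _ _ (near_V V L)).
  intros L' VL' _. unfold nphi, phi0, dphi.
  pose proof (funnorm_le_add _ _ (V_form L VL) (V_form L' VL')).
  pose proof (funnorm_le_add _ _ (V_form L' VL') (V_form L VL)) as B.
  rewrite funnorm_subC in B by auto. apply Rabs_le. lra.
Qed.

Let Dl L' := phi0 * nu L' * (1 + 2 * phi0 * du L').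

Lemma tends_Dl : tends_L Dl tau0.
Proof.
  apply (tends_to_eq _ _ _ (phi0 * u0 * (1 + 2 * phi0 * 0))); [|unfold tau0; ring].
  pose proof tends_nu. pose proof tends_du. unfold Dl. tend.
Qed.

(* From [adl (1 - q) <= phi0 * h * nu] with [q = phi0 * du < 1/2], using
   [1 / (1 - q) <= 1 + 2 q]. *)
Lemma near_adl_le : near_L (fun L' => adl L' <= h L' * Dl L').
Proof.
  assert (T : tends_L (fun L' => phi0 * du L') 0).
  { apply (tends_to_eq _ _ _ (phi0 * 0)); [|ring]. pose proof tends_du. tend. }
  apply (near_mono _ _ _ _ (tends_to_near_lt _ _ _ _ (1/2) T ltac:(lra))). intros L' VL' A.
  pose proof (eigenvalue_change_le EL (V_eigen L' VL')) as B.
  destruct (quantities_ge0 L' VL') as [h0 [du0 [nu0 _]]].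
  fold phi0 in B. unfold adl, h, Dl, nu, du in *.
  pose proof (kabs_ge0 (kadd (lam L') (kopp (lam L)))). set (a := kabs (kadd (lam L') (kopp (lam L)))) in *.
  set (hh := opnorm (op_sub L' L)) in *.
  set (n1 := bnorm (u L')) in *. set (dd := bnorm (bsub (u L') (u L))) in *.
  assert (a <= 2 * (phi0 * hh * n1)) by nra.
  assert (a * (phi0 * dd) <= 2 * (phi0 * hh * n1) * (phi0 * dd)) by (apply Rmult_le_compat_r; nra).
  nra.
Qed.

Lemma tends_adl : tends_L adl 0.
Proof.
  apply (tends_to_le _ _ _ _ (fun L' => h L' * Dl L')).
  - apply (near_mono _ _ _ _ near_adl_le). intros L' VL' A.
    destruct (quantities_ge0 L' VL') as [_ [_ [_ [_ [_ [_ Ha]]]]]].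
    rewrite Rminus_0_r, Rabs_right; lra.
  - apply (tends_to_eq _ _ _ (0 * tau0)); [|ring]. pose proof tends_h. pose proof tends_Dl. tend.
Qed.

(* The crude estimate of [S_L' - S_L] contains [gam L'] itself, with a
   coefficient that is small near [L]. *)
Lemma near_gam_bounded : near_L (fun L' => gam L' <= 2 * gam0 * (tau0 + 2)).
Proof.
  assert (TQ : tends_L (fun L' => phi0 * du L' + h L' * gam0 + adl L' * gam0) 0).
  { apply (tends_to_eq _ _ _ (phi0 * 0 + 0 * gam0 + 0 * gam0)); [|ring].
    pose proof tends_du. pose proof tends_h. pose proof tends_adl. tend. }
  assert (TN : tends_L (fun L' => nphi L' * nu L') tau0).
  { pose proof tends_nphi. pose proof tends_nu. unfold tau0. tend. }
  apply (near_mono _ _ _ _ (near_and _ _ _ _ (tends_to_near_lt _ _ _ _ (1/2) TQ ltac:(lra))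
    (tends_to_near_lt _ _ _ _ (tau0 + 1) TN ltac:(lra)))).
  intros L' VL' [A B].
  pose proof (quantities_ge0 L' VL') as [n1 [n2 [n3 [n4 [n5 [n6 n7]]]]]].
  assert (C : gam L' <= gam0 + gamma_err_crude lam u phi L L').
  { apply opnorm_le_add; [apply (S_BLop (V_eigen L' VL'))|apply (S_BLop EL)| |].
    - unfold gamma_err_crude. fold phi0 gam0.
      fold (gam L') (h L') (adl L') (nu L') (du L') (nphi L'). pos.
    - apply (S_change_le_crude EL (V_eigen L' VL')). }
  unfold gamma_err_crude in C. fold phi0 gam0 in C.
  fold (gam L') (h L') (adl L') (nu L') (du L') (nphi L') in C.
  set (q := phi0 * du L' + h L' * gam0 + adl L' * gam0) in *.
  assert (C2 : gam L' * (1 - q) <= gam0 * (1 + nphi L' * nu L')) by (unfold q; nra).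
  assert (C3 : gam0 * (1 + nphi L' * nu L') <= gam0 * (tau0 + 2)) by (apply Rmult_le_compat_l; lra).
  nra.
Qed.

Let c2 L' := phi0 * u0 + phi0 * Dl L' * du L'.
Let c1 L' := gam0 + Dl L' * gam0.
Let c0 L' := (nphi L' * gam0 * gam0 + Dl L' * dphi L' * gam0 * gam0) * nu L'.
Let gam_rate L' := c2 L' * (gam L' * gam L') + c1 L' * gam L' + c0 L'.
Let tau_rate L' :=
  nphi L' * (Dl L' * gam0 * du L' + gam0 * nu L') + u0 * (phi0 * gam L' + Dl L' * dphi L' * gam L').

(* The error terms are affine in [adl], which is at most [h * Dl] near [L]. *)
Lemma gamma_err_split L' : gamma_err lam u phi L L' = h L' * gam_rate L' +
  (adl L' - h L' * Dl L') * (phi0 * (gam L' * (gam L' * du L')) + dphi L' * gam0 * gam0 * nu L' + gam L' * gam0).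
Proof. unfold gamma_err, gam_rate, c2, c1, c0, h, adl, Dl, du, nu, dphi, gam, phi0, u0, gam0, nphi. ring. Qed.

Lemma tau_err_split L' : tau_err lam u phi L L' = h L' * tau_rate L' +
  (adl L' - h L' * Dl L') * (nphi L' * gam0 * du L' + u0 * dphi L' * gam L').
Proof. unfold tau_err, tau_rate, h, adl, Dl, du, nu, dphi, gam, phi0, u0, gam0, nphi. ring. Qed.

Lemma near_gam_change_le : near_L (fun L' => Rabs (gam L' - gam0) <= h L' * gam_rate L').
Proof.
  apply (near_mono _ _ _ _ near_adl_le). intros L' VL' A.
  pose proof (quantities_ge0 L' VL') as [n1 [n2 [n3 [n4 [n5 [n6 n7]]]]]].
  assert (Hle : gamma_err lam u phi L L' <= h L' * gam_rate L').
  { rewrite gamma_err_split.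
    assert (0 <= phi0 * (gam L' * (gam L' * du L')) + dphi L' * gam0 * gam0 * nu L' + gam L' * gam0) by pos.
    nra. }
  assert (E0 : 0 <= gamma_err lam u phi L L').
  { unfold gamma_err. fold phi0 gam0 u0. fold (gam L') (h L') (adl L') (nu L') (du L') (nphi L') (dphi L').
    pos. }
  pose proof (S_BLop (V_eigen L' VL')) as HS'. pose proof (S_BLop EL) as HS.
  pose proof (opnorm_le_add _ _ _ HS' HS E0 (S_change_le_fine EL (V_eigen L' VL'))) as D1.
  assert (D2 : gam0 <= gam L' + gamma_err lam u phi L L').
  { apply opnorm_le_add; auto. intro x. rewrite norm_subC. apply (S_change_le_fine EL (V_eigen L' VL')). }
  fold (gam L') gam0 in D1. apply Rabs_le. lra.
Qed.

Lemma tends_gam : tends_L gam gam0.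
Proof.
  set (B := 2 * gam0 * (tau0 + 2)).
  assert (TB : exists K, tends_L (fun L' => c2 L' * (B * B) + c1 L' * B + c0 L') K).
  { eexists. pose proof tends_Dl. pose proof tends_du. pose proof tends_nphi.
    pose proof tends_dphi. pose proof tends_nu. unfold c2, c1, c0. tend. }
  destruct TB as [K TB].
  apply (tends_to_le _ _ _ _ (fun L' => (K + 1) * h L')); [|apply tends_mult_h].
  apply (near_mono _ _ _ _ (near_and _ _ _ _ (near_and _ _ _ _ near_gam_change_le near_gam_bounded)
    (tends_to_near_lt _ _ _ _ (K + 1) TB ltac:(lra)))).
  intros L' VL' [[A Hg] C]. fold B in Hg.
  pose proof (quantities_ge0 L' VL') as [n1 [n2 [n3 [n4 [n5 [n6 n7]]]]]].
  assert (Dl0 : 0 <= Dl L') by (unfold Dl; apply Rmult_le_pos; [pos|nra]).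
  assert (c20 : 0 <= c2 L') by (unfold c2; pos).
  assert (c10 : 0 <= c1 L') by (unfold c1; pos).
  assert (gam_rate L' <= K + 1).
  { unfold gam_rate. assert (gam L' * gam L' <= B * B) by nra.
    assert (c2 L' * (gam L' * gam L') <= c2 L' * (B * B)) by (apply Rmult_le_compat_l; auto).
    assert (c1 L' * gam L' <= c1 L' * B) by (apply Rmult_le_compat_l; auto).
    lra. }
  assert (h L' * gam_rate L' <= h L' * (K + 1)) by (apply Rmult_le_compat_l; lra).
  lra.
Qed.

Lemma near_tau_change_le : near_L (fun L' => Rabs (tau_of u phi L - tau_of u phi L') <= h L' * tau_rate L').
Proof.
  apply (near_mono _ _ _ _ near_adl_le). intros L' VL' A.
  pose proof (quantities_ge0 L' VL') as [n1 [n2 [n3 [n4 [n5 [n6 n7]]]]]].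
  assert (Hle : tau_err lam u phi L L' <= h L' * tau_rate L').
  { rewrite tau_err_split. assert (0 <= nphi L' * gam0 * du L' + u0 * dphi L' * gam L') by pos. nra. }
  assert (E0 : 0 <= tau_err lam u phi L L').
  { unfold tau_err. fold phi0 gam0 u0. fold (gam L') (h L') (adl L') (nu L') (du L') (nphi L') (dphi L').
    pos. }
  pose proof (rank_one_norm_le_add _ _ _ _ _ (V_form L' VL') (V_form L VL) (eigvec_norm_pos (V_eigen L' VL'))
    E0 (rank_one_change_le EL (V_eigen L' VL'))) as D1.
  assert (D2 : funnorm (phi L) * bnorm (u L) <= funnorm (phi L') * bnorm (u L') + tau_err lam u phi L L').
  { apply (rank_one_norm_le_add _ _ _ _ _ (V_form L VL) (V_form L' VL') (eigvec_norm_pos EL) E0).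
    intro x. rewrite norm_subC. apply (rank_one_change_le EL (V_eigen L' VL')). }
  unfold tau_of. apply Rabs_le. lra.
Qed.

Lemma tends_tau_rate : tends_L tau_rate (2 * gam0 * tau0).
Proof.
  apply (tends_to_eq _ _ _ (phi0 * (tau0 * gam0 * 0 + gam0 * u0) + u0 * (phi0 * gam0 + tau0 * 0 * gam0)));
    [|unfold tau0; ring].
  pose proof tends_Dl. pose proof tends_du. pose proof tends_nphi. pose proof tends_dphi.
  pose proof tends_nu. pose proof tends_gam. unfold tau_rate. tend.
Qed.

Lemma tends_gam_rate : tends_L gam_rate (gam0 ^ 2 * (1 + 3 * tau0)).
Proof.
  apply (tends_to_eq _ _ _ ((phi0 * u0 + phi0 * tau0 * 0) * (gam0 * gam0) + (gam0 + tau0 * gam0) * gam0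
    + (phi0 * gam0 * gam0 + tau0 * 0 * gam0 * gam0) * u0)); [|unfold tau0; ring].
  pose proof tends_Dl. pose proof tends_du. pose proof tends_nphi. pose proof tends_dphi.
  pose proof tends_nu. pose proof tends_gam. unfold gam_rate, c2, c1, c0. tend.
Qed.

Lemma metric_deriv_tau : metric_deriv_le V (tau_of u phi) L (2 * gamma_of lam u phi L * tau_of u phi L).
Proof.
  apply (metric_deriv_le_of_err _ _ V_bounded L_bounded _ tau_rate).
  - change (0 <= 2 * gam0 * tau0). unfold tau0. pos; lra.
  - exact tends_tau_rate.
  - exact near_tau_change_le.
Qed.

Lemma metric_deriv_gamma :
  metric_deriv_le V (gamma_of lam u phi) L (gamma_of lam u phi L ^ 2 * (1 + 3 * tau_of u phi L)).
Proof.
  apply (metric_deriv_le_of_err _ _ V_bounded L_bounded _ gam_rate).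
  - change (0 <= gam0 ^ 2 * (1 + 3 * tau0)). unfold tau0.
    apply Rmult_le_pos; [apply pow_le; auto|]. pose proof (Rmult_le_pos _ _ phi0_ge0 u0_ge0). lra.
  - exact tends_gam_rate.
  - apply (near_mono _ _ _ _ near_gam_change_le). intros L' _ A.
    unfold gamma_of. rewrite Rabs_minus_sym. exact A.
Qed.

End MetricDerivatives.

Theorem corollary5p2 (k : Kind) (X : Banach k)
  (L0 : X -> X) (lam0 : sc k) (V : (X -> X) -> Prop)
  (lam : (X -> X) -> sc k) (u : (X -> X) -> X) (phi : (X -> X) -> X -> sc k) :
  BLop L0 ->
  simple_isolated_eigenvalue L0 lam0 ->
  is_open_op V -> V L0 ->
  analytic_on raw_K V lam ->
  analytic_on raw_X V u ->
  analytic_on raw_dual V phi ->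
  lam L0 = lam0 ->
  (forall L, V L ->
     simple_isolated_eigenvalue L (lam L) /\
     u L <> bzero X /\ L (u L) = bscal (lam L) (u L) /\
     BLfun (phi L) /\ (forall x, phi L (L x) = kmul (lam L) (phi L x)) /\
     phi L (u L) = kone) ->
  forall L, V L ->
    metric_deriv_le V (tau_of u phi) L
      (2 * gamma_of lam u phi L * tau_of u phi L) /\
    metric_deriv_le V (gamma_of lam u phi) L
      (gamma_of lam u phi L ^ 2 * (1 + 3 * tau_of u phi L)).
Proof.
  intros _ _ V_open _ _ u_analytic phi_analytic _ V_spectral L VL.
  assert (V_eigen : forall L', V L' -> eigen_data lam u phi L').
  { intros L' VL'. destruct (V_spectral L' VL') as [Hs [_ [Hu [Hf [Hl Hn]]]]].
    exact {| ed_bounded := proj1 (V_open L' VL'); ed_simple := Hs; ed_eigvec := Hu;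
             ed_form := Hf; ed_eigform := Hl; ed_normalized := Hn |}. }
  split.
  - exact (metric_deriv_tau lam u phi V L V_eigen VL (u_analytic L VL) (phi_analytic L VL)).
  - exact (metric_deriv_gamma lam u phi V L V_eigen VL (u_analytic L VL) (phi_analytic L VL)).
Qed.
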